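(* Let $\mathcal C$ be a $(2,1)$-category, $\mathcal A,\mathcal B$ arrowy $2$-subcategories, $\mathcal D$ a $2$-category, and $(F_{\mathcal A},F_{\mathcal B},G)$ an object of $\mathrm{GD}_{\mathcal A,\mathcal B}(\mathcal C,\mathcal D)$ with common object map $F_0$. For a morphism $f\colon X\to Y$ of $\mathcal A\cap\mathcal B$, let $E_f$ be the $(\mathcal A,\mathcal B)$-square with $b=f$, $q=f$, $a=1_Y$, $p=1_Y$ and identity $2$-cell, and define $\rho(f)$ as the composite $F_{\mathcal B}(f)\cong F_{\mathcal A}(1_Y)F_{\mathcal B}(f)\xRightarrow{G_{E_f}}F_{\mathcal B}(1_Y)F_{\mathcal A}(f)\cong F_{\mathcal A}(f)$. Then $\rho$, with identity components $\rho(X)=1_{F_0X}$ and $2$-cells $\rho(f)$, is a pseudonatural transformation $F_{\mathcal B}|_{\mathcal A\cap\mathcal B}\to F_{\mathcal A}|_{\mathcal A\cap\mathcal B}$ which is invertible in $\mathrm{PsFun}(\mathcal A\cap\mathcal B,\mathcal D)$. Moreover: (c) for every $(\mathcal A,\mathcal B)$-square $D$ (edges $b\colon X\to Y$, $a\colon Z\to W$, $q\colon X\to Z$, $p\colon Y\to W$, $\alpha\colon aq\Rightarrow pb$) with $p,q$ in $\mathcal A\cap\mathcal B$, the composite $F_{\mathcal A}(a)F_{\mathcal B}(q)\xRightarrow{\rho(q)}F_{\mathcal A}(a)F_{\mathcal A}(q)\cong F_{\mathcal A}(aq)\xRightarrow{F_{\mathcal A}(\alpha)}F_{\mathcal A}(pb)$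 equals $F_{\mathcal A}(a)F_{\mathcal B}(q)\xRightarrow{G_D}F_{\mathcal B}(p)F_{\mathcal A}(b)\xRightarrow{\rho(p)}F_{\mathcal A}(p)F_{\mathcal A}(b)\cong F_{\mathcal A}(pb)$; (c$'$) for every such square with $a,b$ in $\mathcal A\cap\mathcal B$, the composite $F_{\mathcal A}(a)F_{\mathcal B}(q)\xRightarrow{\rho(a)^{-1}}F_{\mathcal B}(a)F_{\mathcal B}(q)\cong F_{\mathcal B}(aq)\xRightarrow{F_{\mathcal B}(\alpha)}F_{\mathcal B}(pb)$ equals $F_{\mathcal A}(a)F_{\mathcal B}(q)\xRightarrow{G_D}F_{\mathcal B}(p)F_{\mathcal A}(b)\xRightarrow{\rho(b)^{-1}}F_{\mathcal B}(p)F_{\mathcal B}(b)\cong F_{\mathcal B}(pb)$.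
   Context: A $(2,1)$-category is a $2$-category whose $2$-cells are all invertible; an arrowy $2$-subcategory has all objects and is full on $2$-cells (hom-inclusions fully faithful and injective on objects). $\cong$ denotes coherence constraints of pseudofunctors; composition is juxtaposition. An $(\mathcal A,\mathcal B)$-square consists of $b\colon X\to Y$, $a\colon Z\to W$ in $\mathcal A$, $q\colon X\to Z$, $p\colon Y\to W$ in $\mathcal B$, and a $2$-cell $\alpha\colon aq\Rightarrow pb$. $\mathrm{GD}_{\mathcal A,\mathcal B}(\mathcal C,\mathcal D)$: objects are triples $(F_{\mathcal A},F_{\mathcal B},G)$ with $F_{\mathcal A}\colon\mathcal A\to\mathcal D$, $F_{\mathcal B}\colon\mathcal B\to\mathcal D$ pseudofunctors with the same object map and $G_D\colon F_{\mathcal A}(a)F_{\mathcal B}(q)\Rightarrow F_{\mathcal B}(p)F_{\mathcal A}(b)$ invertible $2$-cells for all $(\mathcal A,\mathcal B)$-squares $D$, satisfying: (a) for squares with $q=1_X,p=1_Y$, $\alpha\colon a\Rightarrow b$: $F_{\mathcal A}(a)\cong F_{\mathcal A}(a)F_{\mathcal B}(1_X)\xRightarrow{G_D}F_{\mathcal B}(1_Y)F_{\mathcal A}(b)\cong F_{\mathcal A}(b)$ equals $F_{\mathcal A}(\alpha)$; (a$'$) for squares with $b=1_X$, $a=1_Y$, $\alpha\colon q\Rightarrow p$: $F_{\mathcal B}(q)\cong F_{\mathcal A}(1_Y)F_{\mathcal B}(q)\xRightarrow{G_D}F_{\mathcal B}(p)F_{\mathcal A}(1_X)\cong F_{\mathcal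 B}(p)$ equals $F_{\mathcal B}(\alpha)$; (b) for vertically composable squares $D$ (edges $c_1,c_2,q,p$, $\alpha\colon c_2q\Rightarrow pc_1$) and $D'$ (edges $c_2,c_3,q',p'$, $\alpha'\colon c_3q'\Rightarrow p'c_2$) with composite $D''$ (edges $c_1,c_3,q'q,p'p$, $2$-cell $(p'\alpha)(\alpha'q)$): $G_D\circ G_{D'}$ followed by $F_{\mathcal B}(p')F_{\mathcal B}(p)\cong F_{\mathcal B}(p'p)$ equals $G_{D''}$ preceded by $F_{\mathcal B}(q')F_{\mathcal B}(q)\cong F_{\mathcal B}(q'q)$; (b$'$) for horizontally composable squares $D$ (edges $b,a,p_1,p_2$, $\alpha\colon ap_1\Rightarrow p_2b$) and $D'$ (edges $b',a',p_2,p_3$, $\alpha'\colon a'p_2\Rightarrow p_3b'$) with composite $D''$ (edges $b'b,a'a,p_1,p_3$, $2$-cell $(\alpha'b)(a'\alpha)$): $G_{D'}\circ G_D$ followed by $F_{\mathcal A}(b')F_{\mathcal A}(b)\cong F_{\mathcal A}(b'b)$ equals $G_{D''}$ preceded by $F_{\mathcal A}(a')F_{\mathcal A}(a)\cong F_{\mathcal A}(a'a)$. A pseudonatural transformation $\rho\colon F\to F'$ has components $\rho(X)$ and invertible $2$-cells $\rho(f)\colon\rho(Y)F(f)\Rightarrow F'(f)\rho(X)$. *)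

Set Implicit Arguments.
Unset Strict Implicit.

Unset Implicit Arguments.
Record TwoCatData := {
  ob : Type;
  hom : ob -> ob -> Type;
  cell : forall X Y : ob, hom X Y -> hom X Y -> Type;
  id1 : forall X : ob, hom X X;
  comp1 : forall X Y Z : ob, hom Y Z -> hom X Y -> hom X Z;
  id2 : forall (X Y : ob) (f : hom X Y), cell X Y f f;
  vcomp : forall (X Y : ob) (f g h : hom X Y),
      cell X Y g h -> cell X Y f g -> cell X Y f h;
  lwh : forall (X Y Z : ob) (h : hom Y Z) (f g : hom X Y),
      cell X Y f g -> cell X Z (comp1 X Y Z h f) (comp1 X Y Z h g);
  rwh : forall (X Y Z : ob) (f g : hom Y Z),
      cell Y Z f g -> forall h : hom X Y, cell X Z (comp1 X Y Z f h) (comp1 X Y Z g h)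
}.
Set Implicit Arguments.
Arguments hom t X Y : clear implicits.
Arguments cell {t X Y} f g : rename.
Arguments id1 {C} X : rename.
Arguments comp1 {C X Y Z} g f : rename.
Arguments id2 {C X Y} f : rename.
Arguments vcomp {C X Y f g h} b a : rename.
Arguments lwh {C X Y Z} h {f g} a : rename.
Arguments rwh {C X Y Z f g} a h : rename.

Definition cast2 {C : TwoCatData} {X Y : ob C} {f f' g g' : hom C X Y}
  (e1 : f = f') (e2 : g = g') (a : cell f g) : cell f' g' :=
  match e1 in _ = f1 return cell f1 g' with
  | eq_refl => match e2 in _ = g1 return cell f g1 with eq_refl => a end
  end.

Record TwoCatAx (C : TwoCatData) : Prop := {
  c_assoc : forall (X Y Z W : ob C) (h : hom C Z W) (g : hom C Y Z) (f : hom C X Y),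
      comp1 (comp1 h g) f = comp1 h (comp1 g f);
  c_idl : forall (X Y : ob C) (f : hom C X Y), comp1 (id1 Y) f = f;
  c_idr : forall (X Y : ob C) (f : hom C X Y), comp1 f (id1 X) = f;
  v_assoc : forall (X Y : ob C) (f g h k : hom C X Y)
      (c : cell h k) (b : cell g h) (a : cell f g),
      vcomp c (vcomp b a) = vcomp (vcomp c b) a;
  v_idl : forall (X Y : ob C) (f g : hom C X Y) (a : cell f g), vcomp (id2 g) a = a;
  v_idr : forall (X Y : ob C) (f g : hom C X Y) (a : cell f g), vcomp a (id2 f) = a;
  lwh_id2 : forall (X Y Z : ob C) (h : hom C Y Z) (f : hom C X Y),
      lwh h (id2 f) = id2 (comp1 h f);
  lwh_vcomp : forall (X Y Z : ob C) (h : hom C Y Z) (f g k : hom C X Y)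
      (b : cell g k) (a : cell f g), lwh h (vcomp b a) = vcomp (lwh h b) (lwh h a);
  rwh_id2 : forall (X Y Z : ob C) (f : hom C Y Z) (h : hom C X Y),
      rwh (id2 f) h = id2 (comp1 f h);
  rwh_vcomp : forall (X Y Z : ob C) (f g k : hom C Y Z) (h : hom C X Y)
      (b : cell g k) (a : cell f g), rwh (vcomp b a) h = vcomp (rwh b h) (rwh a h);
  interchange : forall (X Y Z : ob C) (f f' : hom C X Y) (g g' : hom C Y Z)
      (a : cell g g') (b : cell f f'),
      vcomp (rwh a f') (lwh g b) = vcomp (lwh g' b) (rwh a f);
  lwh_lwh : forall (X Y Z W : ob C) (k : hom C Z W) (h : hom C Y Z) (f g : hom C X Y)
      (a : cell f g) (e1 : comp1 (comp1 k h) f = comp1 k (comp1 h f))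
      (e2 : comp1 (comp1 k h) g = comp1 k (comp1 h g)),
      lwh k (lwh h a) = cast2 e1 e2 (lwh (comp1 k h) a);
  rwh_rwh : forall (X Y Z W : ob C) (g g' : hom C Z W) (f : hom C Y Z) (h : hom C X Y)
      (a : cell g g') (e1 : comp1 (comp1 g f) h = comp1 g (comp1 f h))
      (e2 : comp1 (comp1 g' f) h = comp1 g' (comp1 f h)),
      rwh a (comp1 f h) = cast2 e1 e2 (rwh (rwh a f) h);
  lwh_rwh : forall (X Y Z W : ob C) (k : hom C Z W) (g g' : hom C Y Z) (f : hom C X Y)
      (a : cell g g') (e1 : comp1 (comp1 k g) f = comp1 k (comp1 g f))
      (e2 : comp1 (comp1 k g') f = comp1 k (comp1 g' f)),
      lwh k (rwh a f) = cast2 e1 e2 (rwh (lwh k a) f);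
  lwh_id1 : forall (X Y : ob C) (f g : hom C X Y) (a : cell f g)
      (e1 : f = comp1 (id1 Y) f) (e2 : g = comp1 (id1 Y) g),
      lwh (id1 Y) a = cast2 e1 e2 a;
  rwh_id1 : forall (X Y : ob C) (f g : hom C X Y) (a : cell f g)
      (e1 : f = comp1 f (id1 X)) (e2 : g = comp1 g (id1 X)),
      rwh a (id1 X) = cast2 e1 e2 a
}.

Record TwoCat := { tcd :> TwoCatData; tcax : TwoCatAx tcd }.

Definition hcomp {C : TwoCatData} {X Y Z : ob C} {f f' : hom C X Y} {g g' : hom C Y Z}
  (b : cell g g') (a : cell f f') : cell (comp1 g f) (comp1 g' f') :=
  vcomp (rwh b f') (lwh g a).

Definition a_fw (D : TwoCat) {X Y Z W : ob D} (h : hom D Z W) (g : hom D Y Z)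
  (f : hom D X Y) : cell (comp1 (comp1 h g) f) (comp1 h (comp1 g f)) :=
  cast2 eq_refl (c_assoc (tcax D) h g f) (id2 (comp1 (comp1 h g) f)).
Definition a_bw (D : TwoCat) {X Y Z W : ob D} (h : hom D Z W) (g : hom D Y Z)
  (f : hom D X Y) : cell (comp1 h (comp1 g f)) (comp1 (comp1 h g) f) :=
  cast2 (c_assoc (tcax D) h g f) eq_refl (id2 (comp1 (comp1 h g) f)).
Definition lu (D : TwoCat) {X Y : ob D} (f : hom D X Y) : cell (comp1 (id1 Y) f) f :=
  cast2 (eq_sym (c_idl (tcax D) f)) eq_refl (id2 f).
Definition lu_inv (D : TwoCat) {X Y : ob D} (f : hom D X Y) : cell f (comp1 (id1 Y) f) :=
  cast2 eq_refl (eq_sym (c_idl (tcax D) f)) (id2 f).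
Definition ru (D : TwoCat) {X Y : ob D} (f : hom D X Y) : cell (comp1 f (id1 X)) f :=
  cast2 (eq_sym (c_idr (tcax D) f)) eq_refl (id2 f).
Definition ru_inv (D : TwoCat) {X Y : ob D} (f : hom D X Y) : cell f (comp1 f (id1 X)) :=
  cast2 eq_refl (eq_sym (c_idr (tcax D) f)) (id2 f).

Arguments a_fw D {X Y Z W} h g f.
Arguments a_bw D {X Y Z W} h g f.
Arguments lu D {X Y} f.
Arguments lu_inv D {X Y} f.
Arguments ru D {X Y} f.
Arguments ru_inv D {X Y} f.

Definition iso2 {C : TwoCatData} {X Y : ob C} {f g : hom C X Y} (a : cell f g) : Prop :=
  exists b : cell g f, vcomp b a = id2 f /\ vcomp a b = id2 g.

Definition is21 (C : TwoCatData) : Prop :=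
  forall (X Y : ob C) (f g : hom C X Y) (a : cell f g), iso2 a.

Unset Implicit Arguments.
Record Arrowy (C : TwoCatData) := {
  inS : forall X Y : ob C, hom C X Y -> Prop;
  inS_id : forall X : ob C, inS X X (id1 X);
  inS_comp : forall (X Y Z : ob C) (g : hom C Y Z) (f : hom C X Y),
      inS Y Z g -> inS X Y f -> inS X Z (comp1 g f)
}.
Set Implicit Arguments.
Arguments inS {C} s {X Y} f : rename.
Arguments inS_id {C} s X : rename.
Arguments inS_comp {C} s {X Y Z g f} _ _ : rename.

Definition Sub (C : TwoCatData) (S : Arrowy C) : TwoCatData := {|
  ob := ob C;
  hom := fun X Y => {f : hom C X Y | inS S f};
  cell := fun X Y f g => cell (proj1_sig f) (proj1_sig g);
  id1 := fun X => exist _ (id1 X) (inS_id S X);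
  comp1 := fun X Y Z g f => exist _ (comp1 (proj1_sig g) (proj1_sig f))
                              (inS_comp S (proj2_sig g) (proj2_sig f));
  id2 := fun X Y f => id2 (proj1_sig f);
  vcomp := fun X Y f g h b a => vcomp b a;
  lwh := fun X Y Z h f g a => lwh (proj1_sig h) a;
  rwh := fun X Y Z f g a h => rwh a (proj1_sig h)
|}.

Definition ArrI (C : TwoCatData) (S T : Arrowy C) : Arrowy C := {|
  inS := fun X Y f => inS S f /\ inS T f;
  inS_id := fun X => conj (inS_id S X) (inS_id T X);
  inS_comp := fun X Y Z g f hg hf =>
     conj (inS_comp S (proj1 hg) (proj1 hf)) (inS_comp T (proj2 hg) (proj2 hf))
|}.

Definition incl {C : TwoCatData} {S T : Arrowy C}
  (sub : forall (X Y : ob C) (f : hom C X Y), inS T f -> inS S f)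
  {X Y : ob C} (f : hom (Sub T) X Y) : hom (Sub S) X Y :=
  exist _ (proj1_sig f) (sub X Y (proj1_sig f) (proj2_sig f)).

Unset Implicit Arguments.
Record PFData (C D : TwoCatData) (F0 : ob C -> ob D) := {
  F1 : forall X Y : ob C, hom C X Y -> hom D (F0 X) (F0 Y);
  F2 : forall (X Y : ob C) (f g : hom C X Y), cell f g -> cell (F1 X Y f) (F1 X Y g);
  Fc : forall (X Y Z : ob C) (g : hom C Y Z) (f : hom C X Y),
      cell (comp1 (F1 Y Z g) (F1 X Y f)) (F1 X Z (comp1 g f));
  Fci : forall (X Y Z : ob C) (g : hom C Y Z) (f : hom C X Y),
      cell (F1 X Z (comp1 g f)) (comp1 (F1 Y Z g) (F1 X Y f));
  Fu : forall X : ob C, cell (id1 (F0 X)) (F1 X X (id1 X));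
  Fui : forall X : ob C, cell (F1 X X (id1 X)) (id1 (F0 X))
}.
Set Implicit Arguments.
Arguments F1 {C D F0} p {X Y} f.
Arguments F2 {C D F0} p {X Y f g} a.
Arguments Fc {C D F0} p {X Y Z} g f.
Arguments Fci {C D F0} p {X Y Z} g f.
Arguments Fu {C D F0} p X.
Arguments Fui {C D F0} p X.

Record is_pseudofun (C D : TwoCatData) (F0 : ob C -> ob D) (F : PFData C D F0) : Prop := {
  pf_id2 : forall (X Y : ob C) (f : hom C X Y), F2 F (id2 f) = id2 (F1 F f);
  pf_vcomp : forall (X Y : ob C) (f g h : hom C X Y) (b : cell g h) (a : cell f g),
      F2 F (vcomp b a) = vcomp (F2 F b) (F2 F a);
  pf_Fc_iso : forall (X Y Z : ob C) (g : hom C Y Z) (f : hom C X Y),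
      vcomp (Fci F g f) (Fc F g f) = id2 _ /\ vcomp (Fc F g f) (Fci F g f) = id2 _;
  pf_Fu_iso : forall X : ob C,
      vcomp (Fui F X) (Fu F X) = id2 _ /\ vcomp (Fu F X) (Fui F X) = id2 _;
  pf_Fc_nat : forall (X Y Z : ob C) (f f' : hom C X Y) (g g' : hom C Y Z)
      (b : cell g g') (a : cell f f'),
      vcomp (Fc F g' f') (hcomp (F2 F b) (F2 F a)) = vcomp (F2 F (hcomp b a)) (Fc F g f);
  pf_assoc : forall (W X Y Z : ob C) (f : hom C W X) (g : hom C X Y) (h : hom C Y Z)
      (e1 : comp1 (comp1 (F1 F h) (F1 F g)) (F1 F f) = comp1 (F1 F h) (comp1 (F1 F g) (F1 F f)))
      (e2 : F1 F (comp1 (comp1 h g) f) = F1 F (comp1 h (comp1 g f))),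
      vcomp (Fc F h (comp1 g f)) (lwh (F1 F h) (Fc F g f))
      = cast2 e1 e2 (vcomp (Fc F (comp1 h g) f) (rwh (Fc F h g) (F1 F f)));
  pf_lunit : forall (X Y : ob C) (f : hom C X Y)
      (e1 : F1 F f = comp1 (id1 (F0 Y)) (F1 F f)) (e2 : F1 F f = F1 F (comp1 (id1 Y) f)),
      vcomp (Fc F (id1 Y) f) (rwh (Fu F Y) (F1 F f)) = cast2 e1 e2 (id2 (F1 F f));
  pf_runit : forall (X Y : ob C) (f : hom C X Y)
      (e1 : F1 F f = comp1 (F1 F f) (id1 (F0 X))) (e2 : F1 F f = F1 F (comp1 f (id1 X))),
      vcomp (Fc F f (id1 X)) (lwh (F1 F f) (Fu F X)) = cast2 e1 e2 (id2 (F1 F f))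
}.

Definition restrict {C : TwoCatData} {D : TwoCatData} {F0 : ob C -> ob D} {S T : Arrowy C}
  (sub : forall (X Y : ob C) (f : hom C X Y), inS T f -> inS S f)
  (F : PFData (Sub S) D F0) : PFData (Sub T) D F0 := {|
  F1 := fun X Y f => F1 F (incl sub f);
  F2 := fun X Y f g a => @F2 _ _ _ F X Y (incl sub f) (incl sub g) a;
  Fc := fun X Y Z g f =>
     vcomp (@F2 _ _ _ F X Z (comp1 (incl sub g) (incl sub f)) (incl sub (comp1 g f))
              (id2 (comp1 (proj1_sig g) (proj1_sig f))))
           (Fc F (incl sub g) (incl sub f));
  Fci := fun X Y Z g f =>
     vcomp (Fci F (incl sub g) (incl sub f))
           (@F2 _ _ _ F X Z (incl sub (comp1 g f)) (comp1 (incl sub g) (incl sub f))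
              (id2 (comp1 (proj1_sig g) (proj1_sig f))));
  Fu := fun X => vcomp (@F2 _ _ _ F X X (@id1 (Sub S) X) (incl sub (id1 X)) (id2 (@id1 C X))) (Fu F X);
  Fui := fun X => vcomp (Fui F X) (@F2 _ _ _ F X X (incl sub (id1 X)) (@id1 (Sub S) X) (id2 (@id1 C X)))
|}.

Unset Implicit Arguments.
Record TrData {C D : TwoCatData} {F0 F0' : ob C -> ob D}
  (F : PFData C D F0) (F' : PFData C D F0') := {
  tc : forall X : ob C, hom D (F0 X) (F0' X);
  tcc : forall (X Y : ob C) (f : hom C X Y),
      cell (comp1 (tc Y) (F1 F f)) (comp1 (F1 F' f) (tc X))
}.
Set Implicit Arguments.
Arguments tc {C D F0 F0' F F'} t X.
Arguments tcc {C D F0 F0' F F'} t {X Y} f.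

Record is_pseudonat {C : TwoCatData} {D : TwoCat} {F0 F0' : ob C -> ob D}
  {F : PFData C D F0} {F' : PFData C D F0'} (t : TrData F F') : Prop := {
  pn_iso : forall (X Y : ob C) (f : hom C X Y), iso2 (tcc t f);
  pn_nat : forall (X Y : ob C) (f g : hom C X Y) (a : cell f g),
      vcomp (tcc t g) (lwh (tc t Y) (F2 F a)) = vcomp (rwh (F2 F' a) (tc t X)) (tcc t f);
  pn_comp : forall (X Y Z : ob C) (f : hom C X Y) (g : hom C Y Z),
      vcomp (tcc t (comp1 g f)) (lwh (tc t Z) (Fc F g f))
      = vcomp (rwh (Fc F' g f) (tc t X))
         (vcomp (a_bw D (F1 F' g) (F1 F' f) (tc t X))
          (vcomp (lwh (F1 F' g) (tcc t f))
           (vcomp (a_fw D (F1 F' g) (tc t Y) (F1 F f))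
            (vcomp (rwh (tcc t g) (F1 F f))
                   (a_bw D (tc t Z) (F1 F g) (F1 F f))))));
  pn_unit : forall X : ob C,
      vcomp (tcc t (id1 X)) (lwh (tc t X) (Fu F X))
      = vcomp (rwh (Fu F' X) (tc t X)) (vcomp (lu_inv D (tc t X)) (ru D (tc t X)))
}.

Definition idTr {C : TwoCatData} {D : TwoCat} {F0 : ob C -> ob D} (F : PFData C D F0)
  : TrData F F := {|
  tc := fun X => id1 (F0 X);
  tcc := fun X Y f => vcomp (ru_inv D (F1 F f)) (lu D (F1 F f))
|}.

Definition compTr {C : TwoCatData} {D : TwoCat} {F0 F0' F0'' : ob C -> ob D}
  {F : PFData C D F0} {F' : PFData C D F0'} {F'' : PFData C D F0''}
  (s : TrData F' F'') (t : TrData F F') : TrData F F'' := {|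
  tc := fun X => comp1 (tc s X) (tc t X);
  tcc := fun X Y f =>
    vcomp (a_fw D (F1 F'' f) (tc s X) (tc t X))
     (vcomp (rwh (tcc s f) (tc t X))
      (vcomp (a_bw D (tc s Y) (F1 F' f) (tc t X))
       (vcomp (lwh (tc s Y) (tcc t f))
              (a_fw D (tc s Y) (tc t Y) (F1 F f)))))
|}.

Definition TrEq {C D : TwoCatData} {F0 F0' : ob C -> ob D}
  {F : PFData C D F0} {F' : PFData C D F0'} (t1 t2 : TrData F F') : Prop :=
  exists e : (forall X : ob C, tc t1 X = tc t2 X),
    forall (X Y : ob C) (f : hom C X Y),
      tcc t2 f = cast2 (f_equal (fun c => comp1 c (F1 F f)) (e Y))
                       (f_equal (fun c => comp1 (F1 F' f) c) (e X)) (tcc t1 f).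

Section GD.
Variables (C : TwoCat) (A B : Arrowy C) (D : TwoCat) (F0 : ob C -> ob D).
Variables (FA : PFData (Sub A) D F0) (FB : PFData (Sub B) D F0).

(* G_D for an (A,B)-square D = (b : X->Y, a : Z->W in A; q : X->Z, p : Y->W in B;
   alpha : a q => p b) *)
Definition GType := forall (X Y Z W : ob C) (b : hom (Sub A) X Y) (a : hom (Sub A) Z W)
  (q : hom (Sub B) X Z) (p : hom (Sub B) Y W)
  (al : cell (comp1 (proj1_sig a) (proj1_sig q)) (comp1 (proj1_sig p) (proj1_sig b))),
  cell (comp1 (F1 FA a) (F1 FB q)) (comp1 (F1 FB p) (F1 FA b)).
Definition GinvType := forall (X Y Z W : ob C) (b : hom (Sub A) X Y) (a : hom (Sub A) Z W)
  (q : hom (Sub B) X Z) (p : hom (Sub B) Y W)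
  (al : cell (comp1 (proj1_sig a) (proj1_sig q)) (comp1 (proj1_sig p) (proj1_sig b))),
  cell (comp1 (F1 FB p) (F1 FA b)) (comp1 (F1 FA a) (F1 FB q)).

Record is_GD (G : GType) (Ginv : GinvType) : Prop := {
  gd_iso : forall X Y Z W b a q p al,
      vcomp (Ginv X Y Z W b a q p al) (G X Y Z W b a q p al) = id2 _ /\
      vcomp (G X Y Z W b a q p al) (Ginv X Y Z W b a q p al) = id2 _;
  gd_a : forall (X Y : ob C) (a b : hom (Sub A) X Y) (al : cell (proj1_sig a) (proj1_sig b)),
      vcomp (lu D (F1 FA b))
       (vcomp (rwh (Fui FB Y) (F1 FA b))
        (vcomp (G X Y X Y b a (@id1 (Sub B) X) (@id1 (Sub B) Y)
                  (vcomp (lu_inv C (proj1_sig b)) (vcomp al (ru C (proj1_sig a)))))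
         (vcomp (lwh (F1 FA a) (Fu FB X)) (ru_inv D (F1 FA a)))))
      = F2 FA al;
  gd_a' : forall (X Z : ob C) (q p : hom (Sub B) X Z) (al : cell (proj1_sig q) (proj1_sig p)),
      vcomp (ru D (F1 FB p))
       (vcomp (lwh (F1 FB p) (Fui FA X))
        (vcomp (G X X Z Z (@id1 (Sub A) X) (@id1 (Sub A) Z) q p
                  (vcomp (ru_inv C (proj1_sig p)) (vcomp al (lu C (proj1_sig q)))))
         (vcomp (rwh (Fu FA Z) (F1 FB q)) (lu_inv D (F1 FB q)))))
      = F2 FB al;
  (* (b) vertical pasting *)
  gd_b : forall (X Y Z W U V : ob C) (c1 : hom (Sub A) X Y) (c2 : hom (Sub A) Z W)
      (c3 : hom (Sub A) U V) (q : hom (Sub B) X Z) (p : hom (Sub B) Y W)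
      (q' : hom (Sub B) Z U) (p' : hom (Sub B) W V)
      (al : cell (comp1 (proj1_sig c2) (proj1_sig q)) (comp1 (proj1_sig p) (proj1_sig c1)))
      (al' : cell (comp1 (proj1_sig c3) (proj1_sig q')) (comp1 (proj1_sig p') (proj1_sig c2))),
      vcomp (rwh (Fc FB p' p) (F1 FA c1))
       (vcomp (a_bw D (F1 FB p') (F1 FB p) (F1 FA c1))
        (vcomp (lwh (F1 FB p') (G X Y Z W c1 c2 q p al))
         (vcomp (a_fw D (F1 FB p') (F1 FA c2) (F1 FB q))
          (vcomp (rwh (G Z W U V c2 c3 q' p' al') (F1 FB q))
                 (a_bw D (F1 FA c3) (F1 FB q') (F1 FB q))))))
      = vcomp (G X Y U V c1 c3 (@comp1 (Sub B) _ _ _ q' q) (@comp1 (Sub B) _ _ _ p' p)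
                 (vcomp (a_bw C (proj1_sig p') (proj1_sig p) (proj1_sig c1))
                  (vcomp (lwh (proj1_sig p') al)
                   (vcomp (a_fw C (proj1_sig p') (proj1_sig c2) (proj1_sig q))
                    (vcomp (rwh al' (proj1_sig q))
                           (a_bw C (proj1_sig c3) (proj1_sig q') (proj1_sig q)))))))
              (lwh (F1 FA c3) (Fc FB q' q));
  (* (b') horizontal pasting *)
  gd_b' : forall (X Y Z W Y' W' : ob C) (b : hom (Sub A) X Y) (a : hom (Sub A) Z W)
      (p1 : hom (Sub B) X Z) (p2 : hom (Sub B) Y W)
      (b' : hom (Sub A) Y Y') (a' : hom (Sub A) W W') (p3 : hom (Sub B) Y' W')
      (al : cell (comp1 (proj1_sig a) (proj1_sig p1)) (comp1 (proj1_sig p2) (proj1_sig b)))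
      (al' : cell (comp1 (proj1_sig a') (proj1_sig p2)) (comp1 (proj1_sig p3) (proj1_sig b'))),
      vcomp (lwh (F1 FB p3) (Fc FA b' b))
       (vcomp (a_fw D (F1 FB p3) (F1 FA b') (F1 FA b))
        (vcomp (rwh (G Y Y' W W' b' a' p2 p3 al') (F1 FA b))
         (vcomp (a_bw D (F1 FA a') (F1 FB p2) (F1 FA b))
          (vcomp (lwh (F1 FA a') (G X Y Z W b a p1 p2 al))
                 (a_fw D (F1 FA a') (F1 FA a) (F1 FB p1))))))
      = vcomp (G X Y' Z W' (@comp1 (Sub A) _ _ _ b' b) (@comp1 (Sub A) _ _ _ a' a) p1 p3
                 (vcomp (a_fw C (proj1_sig p3) (proj1_sig b') (proj1_sig b))
                  (vcomp (rwh al' (proj1_sig b))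
                   (vcomp (a_bw C (proj1_sig a') (proj1_sig p2) (proj1_sig b))
                    (vcomp (lwh (proj1_sig a') al)
                           (a_fw C (proj1_sig a') (proj1_sig a) (proj1_sig p1)))))))
              (rwh (Fc FA a' a) (F1 FB p1))
}.

Definition AB : Arrowy C := ArrI A B.
Definition subA : forall (X Y : ob C) (f : hom C X Y), inS AB f -> inS A f :=
  fun X Y f h => proj1 h.
Definition subB : forall (X Y : ob C) (f : hom C X Y), inS AB f -> inS B f :=
  fun X Y f h => proj2 h.
Definition inclA {X Y : ob C} (f : hom (Sub AB) X Y) : hom (Sub A) X Y := incl subA f.
Definition inclB {X Y : ob C} (f : hom (Sub AB) X Y) : hom (Sub B) X Y := incl subB f.

Unset Implicit Arguments.
Variables (G : GType) (Ginv : GinvType).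
Set Implicit Arguments.

Definition rhoCell {X Y : ob C} (f : hom (Sub AB) X Y)
  : cell (F1 FB (inclB f)) (F1 FA (inclA f)) :=
  vcomp (lu D (F1 FA (inclA f)))
   (vcomp (rwh (Fui FB Y) (F1 FA (inclA f)))
    (vcomp (G X Y Y Y (inclA f) (@id1 (Sub A) Y) (inclB f) (@id1 (Sub B) Y) (id2 (comp1 (@id1 C Y) (proj1_sig f))))
     (vcomp (rwh (Fu FA Y) (F1 FB (inclB f))) (lu_inv D (F1 FB (inclB f)))))).

Definition rhoInvCell {X Y : ob C} (f : hom (Sub AB) X Y)
  : cell (F1 FA (inclA f)) (F1 FB (inclB f)) :=
  vcomp (lu D (F1 FB (inclB f)))
   (vcomp (rwh (Fui FA Y) (F1 FB (inclB f)))
    (vcomp (Ginv X Y Y Y (inclA f) (@id1 (Sub A) Y) (inclB f) (@id1 (Sub B) Y) (id2 (comp1 (@id1 C Y) (proj1_sig f))))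
     (vcomp (rwh (Fu FB Y) (F1 FA (inclA f))) (lu_inv D (F1 FA (inclA f)))))).

(* rho : F_B|_{A∩B} -> F_A|_{A∩B}, identity components, 2-cells rho(f)
   (read as 1 F_B(f) => F_A(f) 1 via the strict unit laws of D) *)
Definition rhoTr : @TrData (Sub AB) D F0 F0 (restrict subB FB) (restrict subA FA) :=
  @Build_TrData (Sub AB) D F0 F0 (restrict subB FB) (restrict subA FA)
    (fun X => id1 (F0 X))
    (fun (X Y : ob C) (f : hom (Sub AB) X Y) =>
       vcomp (ru_inv D (F1 FA (inclA f))) (vcomp (rhoCell f) (lu D (F1 FB (inclB f))))).

End GD.

From Pilot Require Import Defs.
From Stdlib Require Import ProofIrrelevance Eqdep.
From Corelib Require Import ssreflect.
Set Implicit Arguments.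
Unset Strict Implicit.

(* Up to unit constraints, rho(f) is G at the square E_f.  Conditions (a) and (a') identify G on squares
   with identity B-edges (resp. A-edges) with F_A (resp. F_B) of the 2-cell; together
   with the pasting laws (b), (b') this makes G natural in the edges of a square.
   Pasting a square D with E_p or E_q by (b'), and with E_a or E_b by (b), and comparing
   the two results gives (c) and (c').  Naturality of rho is naturality of G, its unit law
   is G on the identity square, and its composition law follows from (c) and its F_B-side
   counterpart applied to the square (1, g, f, gf) with the right-unit 2-cell.  Since the
   components of rho are identities, rho is an icon, and G^{-1} gives its inverse icon. *)

(** * 2-cells given by equalities of 1-cells *)

Section TwoCellCalculus.
Variable D : TwoCat.
Let ax := tcax D.

(* The structural 2-cells of a strict 2-category are all of this form, so pasting
   computations reduce to bookkeeping of equalities, settled by UIP. *)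
Definition eqcell {X Y : ob D} {f g : hom D X Y} (e : f = g) : cell f g :=
  cast2 eq_refl e (id2 f).

Lemma cast2E {X Y : ob D} {f f' g g' : hom D X Y} (e1 : f = f') (e2 : g = g') (a : cell f g) :
  cast2 e1 e2 a = vcomp (eqcell e2) (vcomp a (eqcell (eq_sym e1))).
Proof. by destruct e1, e2; rewrite /= (v_idl ax) (v_idr ax). Qed.

Lemma cast2_id2 {X Y : ob D} {f f' g : hom D X Y} (e1 : f = f') (e2 : f = g) :
  cast2 e1 e2 (id2 f) = eqcell (eq_trans (eq_sym e1) e2).
Proof. by destruct e1, e2. Qed.

Lemma eqcell_id {X Y : ob D} {f : hom D X Y} (e : f = f) : eqcell e = id2 f.
Proof. by rewrite (UIP_refl _ _ e). Qed.

Lemma eqcell_irr {X Y : ob D} {f g : hom D X Y} (e e' : f = g) : eqcell e = eqcell e'.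
Proof. by rewrite (UIP _ _ _ e e'). Qed.

Lemma eqcell_trans {X Y : ob D} {f g h : hom D X Y} (e1 : f = g) (e2 : g = h) :
  vcomp (eqcell e2) (eqcell e1) = eqcell (eq_trans e1 e2).
Proof. by destruct e1, e2; apply: (v_idl ax). Qed.

Lemma eqcell_trans_ctx {X Y : ob D} {f0 f g h : hom D X Y} (e1 : f = g) (e2 : g = h) (x : cell f0 f) :
  vcomp (eqcell e2) (vcomp (eqcell e1) x) = vcomp (eqcell (eq_trans e1 e2)) x.
Proof. by rewrite (v_assoc ax) eqcell_trans. Qed.

Lemma lwh_eqcell {X Y Z : ob D} (h : hom D Y Z) {f g : hom D X Y} (e : f = g) :
  lwh h (eqcell e) = eqcell (f_equal (comp1 h) e).
Proof. by destruct e; apply: (lwh_id2 ax). Qed.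

Lemma rwh_eqcell {X Y Z : ob D} {f g : hom D Y Z} (e : f = g) (h : hom D X Y) :
  rwh (eqcell e) h = eqcell (f_equal (fun x => comp1 x h) e).
Proof. by destruct e; apply: (rwh_id2 ax). Qed.

Lemma a_fwE {X Y Z W : ob D} (h : hom D Z W) (g : hom D Y Z) (f : hom D X Y) :
  a_fw D h g f = eqcell (c_assoc ax h g f).
Proof. by []. Qed.
Lemma a_bwE {X Y Z W : ob D} (h : hom D Z W) (g : hom D Y Z) (f : hom D X Y) :
  a_bw D h g f = eqcell (eq_sym (c_assoc ax h g f)).
Proof. by rewrite /a_bw cast2_id2; apply: eqcell_irr. Qed.
Lemma luE {X Y : ob D} (f : hom D X Y) : lu D f = eqcell (c_idl ax f).
Proof. by rewrite /lu cast2_id2; apply: eqcell_irr. Qed.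
Lemma lu_invE {X Y : ob D} (f : hom D X Y) : lu_inv D f = eqcell (eq_sym (c_idl ax f)).
Proof. by rewrite /lu_inv cast2_id2; apply: eqcell_irr. Qed.
Lemma ruE {X Y : ob D} (f : hom D X Y) : ru D f = eqcell (c_idr ax f).
Proof. by rewrite /ru cast2_id2; apply: eqcell_irr. Qed.
Lemma ru_invE {X Y : ob D} (f : hom D X Y) : ru_inv D f = eqcell (eq_sym (c_idr ax f)).
Proof. by rewrite /ru_inv cast2_id2; apply: eqcell_irr. Qed.

Lemma lwh_lwhE {X Y Z W : ob D} (k : hom D Z W) (h : hom D Y Z) {f g : hom D X Y} (a : cell f g) :
  lwh k (lwh h a) = vcomp (eqcell (c_assoc ax k h g)) (vcomp (lwh (comp1 k h) a) (eqcell (eq_sym (c_assoc ax k h f)))).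
Proof. by rewrite ((lwh_lwh ax) _ _ _ _ _ _ _ _ _ (c_assoc ax k h f) (c_assoc ax k h g)) cast2E. Qed.

Lemma lwh_rwhE {X Y Z W : ob D} (k : hom D Z W) {g g' : hom D Y Z} (a : cell g g') (f : hom D X Y) :
  lwh k (rwh a f) = vcomp (eqcell (c_assoc ax k g' f)) (vcomp (rwh (lwh k a) f) (eqcell (eq_sym (c_assoc ax k g f)))).
Proof. by rewrite ((lwh_rwh ax) _ _ _ _ _ _ _ _ a (c_assoc ax k g f) (c_assoc ax k g' f)) cast2E. Qed.

Lemma rwh_rwhE {X Y Z W : ob D} {g g' : hom D Z W} (a : cell g g') (f : hom D Y Z) (h : hom D X Y) :
  rwh (rwh a f) h = vcomp (eqcell (eq_sym (c_assoc ax g' f h))) (vcomp (rwh a (comp1 f h)) (eqcell (c_assoc ax g f h))).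
Proof.
  rewrite ((rwh_rwh ax) _ _ _ _ _ _ _ _ a (c_assoc ax g f h) (c_assoc ax g' f h)) cast2E.
  rewrite !(v_assoc ax) eqcell_trans eqcell_id (v_idl ax).
  by rewrite -!(v_assoc ax) eqcell_trans eqcell_id (v_idr ax).
Qed.

Lemma lwh_compE {X Y Z W : ob D} (k : hom D Z W) (h : hom D Y Z) {f g : hom D X Y} (a : cell f g) :
  lwh (comp1 k h) a = vcomp (eqcell (eq_sym (c_assoc ax k h g))) (vcomp (lwh k (lwh h a)) (eqcell (c_assoc ax k h f))).
Proof.
  rewrite lwh_lwhE !(v_assoc ax) eqcell_trans eqcell_id (v_idl ax).
  by rewrite -(v_assoc ax) eqcell_trans eqcell_id (v_idr ax).
Qed.

Lemma rwh_compE {X Y Z W : ob D} {g g' : hom D Z W} (a : cell g g') (f : hom D Y Z) (h : hom D X Y) :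
  rwh a (comp1 f h) = vcomp (eqcell (c_assoc ax g' f h)) (vcomp (rwh (rwh a f) h) (eqcell (eq_sym (c_assoc ax g f h)))).
Proof.
  rewrite rwh_rwhE !(v_assoc ax) eqcell_trans eqcell_id (v_idl ax).
  by rewrite -(v_assoc ax) eqcell_trans eqcell_id (v_idr ax).
Qed.

Lemma rwh_lwhE {X Y Z W : ob D} (k : hom D Z W) {g g' : hom D Y Z} (a : cell g g') (f : hom D X Y) :
  rwh (lwh k a) f = vcomp (eqcell (eq_sym (c_assoc ax k g' f))) (vcomp (lwh k (rwh a f)) (eqcell (c_assoc ax k g f))).
Proof.
  rewrite lwh_rwhE !(v_assoc ax) eqcell_trans eqcell_id (v_idl ax).
  by rewrite -(v_assoc ax) eqcell_trans eqcell_id (v_idr ax).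
Qed.

Lemma lwh_id1E {X Y : ob D} {f g : hom D X Y} (a : cell f g) :
  lwh (id1 Y) a = vcomp (eqcell (eq_sym (c_idl ax g))) (vcomp a (eqcell (c_idl ax f))).
Proof.
  rewrite ((lwh_id1 ax) _ _ _ _ a (eq_sym (c_idl ax f)) (eq_sym (c_idl ax g))) cast2E.
  by rewrite eq_sym_involutive.
Qed.

Lemma rwh_id1E {X Y : ob D} {f g : hom D X Y} (a : cell f g) :
  rwh a (id1 X) = vcomp (eqcell (eq_sym (c_idr ax g))) (vcomp a (eqcell (c_idr ax f))).
Proof.
  rewrite ((rwh_id1 ax) _ _ _ _ a (eq_sym (c_idr ax f)) (eq_sym (c_idr ax g))) cast2E.
  by rewrite eq_sym_involutive.
Qed.

Lemma eqcell_lwh_id1 {X Y : ob D} {f g : hom D X Y} (x : cell f g)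
  (e : g = comp1 (id1 Y) g) (e' : f = comp1 (id1 Y) f) :
  vcomp (eqcell e) x = vcomp (lwh (id1 Y) x) (eqcell e').
Proof.
  rewrite lwh_id1E -!(v_assoc ax) eqcell_trans eqcell_id (v_idr ax).
  by congr vcomp; apply: eqcell_irr.
Qed.

Lemma rwh_transport {X Y Z : ob D} (h h' : hom D X Y) (e : h = h') {f g : hom D Y Z} (a : cell f g) :
  rwh a h' = vcomp (eqcell (f_equal (comp1 g) e)) (vcomp (rwh a h) (eqcell (f_equal (comp1 f) (eq_sym e)))).
Proof. by destruct e; rewrite /= (v_idl ax) (v_idr ax). Qed.

Lemma eqcell_moveL {X Y : ob D} {f g h : hom D X Y} (e : g = h) (x : cell f g) (y : cell f h) :
  vcomp (eqcell e) x = y -> x = vcomp (eqcell (eq_sym e)) y.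
Proof. by destruct e => <- /=; rewrite !(v_idl ax). Qed.

Lemma lwh_vcomp_ctx {X Y Z : ob D} {f g k : hom D X Y} (h : hom D Y Z) (b : cell g k) (a : cell f g)
  {u} (x : cell u _) :
  vcomp (lwh h b) (vcomp (lwh h a) x) = vcomp (lwh h (vcomp b a)) x.
Proof. by rewrite (lwh_vcomp ax) (v_assoc ax). Qed.

Lemma rwh_vcomp_ctx {X Y Z : ob D} {f g k : hom D Y Z} (h : hom D X Y) (b : cell g k) (a : cell f g)
  {u} (x : cell u _) :
  vcomp (rwh b h) (vcomp (rwh a h) x) = vcomp (rwh (vcomp b a) h) x.
Proof. by rewrite (rwh_vcomp ax) (v_assoc ax). Qed.

Lemma interchange_ctx {X Y Z : ob D} {f f' : hom D X Y} {g g' : hom D Y Z} (a : cell g g') (b : cell f f')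
  {u} (x : cell u _) :
  vcomp (lwh g' b) (vcomp (rwh a f) x) = vcomp (rwh a f') (vcomp (lwh g b) x).
Proof. by rewrite (v_assoc ax) -(interchange ax) (v_assoc ax). Qed.

Lemma vcomp_ctx {X Y : ob D} {f g h : hom D X Y} (a : cell f g) (b : cell g h) (c : cell f h)
  {u} (x : cell u f) :
  vcomp b a = c -> vcomp b (vcomp a x) = vcomp c x.
Proof. by move=> <-; rewrite (v_assoc ax). Qed.

Lemma lwh_inverse {X Y Z : ob D} (h : hom D Y Z) {f g : hom D X Y} (c : cell f g) (c' : cell g f) :
  vcomp c c' = id2 _ -> vcomp (lwh h c) (lwh h c') = id2 _.
Proof. by move=> H; rewrite -(lwh_vcomp ax) H (lwh_id2 ax). Qed.

Lemma rwh_inverse {X Y Z : ob D} (h : hom D X Y) {f g : hom D Y Z} (c : cell f g) (c' : cell g f) :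
  vcomp c c' = id2 _ -> vcomp (rwh c h) (rwh c' h) = id2 _.
Proof. by move=> H; rewrite -(rwh_vcomp ax) H (rwh_id2 ax). Qed.

Lemma vcomp_cancel_r {X Y : ob D} {f g h : hom D X Y} (x : cell g h) (c : cell f g) (c' : cell g f) (y : cell f h) :
  vcomp x c = y -> vcomp c c' = id2 _ -> x = vcomp y c'.
Proof. by move=> <- H; rewrite -(v_assoc ax) H (v_idr ax). Qed.

Lemma cancel_iso_eqcell_l {X Y : ob D} {h f1 f2 g : hom D X Y} (u : cell f2 g) (u' : cell g f2)
  (Hu : vcomp u' u = id2 _) (e : f1 = f2) (M N : cell h f1) :
  vcomp u (vcomp (eqcell e) M) = vcomp u (vcomp (eqcell e) N) -> M = N.
Proof.
  have K (P : cell h f1) : P = vcomp (eqcell (eq_sym e)) (vcomp u' (vcomp u (vcomp (eqcell e) P))).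
  { by rewrite (v_assoc ax u') Hu (v_idl ax) eqcell_trans_ctx eqcell_id (v_idl ax). }
  by move=> H; rewrite (K M) H -K.
Qed.

Lemma cancel_iso_eqcell_r {X Y : ob D} {h f0 f1 g : hom D X Y} (u : cell f0 f1) (u' : cell f1 f0)
  (Hu : vcomp u u' = id2 _) (e : f1 = h) (M N : cell h g) :
  vcomp M (vcomp (eqcell e) u) = vcomp N (vcomp (eqcell e) u) -> M = N.
Proof.
  have K (P : cell h g) : P = vcomp (vcomp P (vcomp (eqcell e) u)) (vcomp u' (eqcell (eq_sym e))).
  { by rewrite -!(v_assoc ax) (v_assoc ax u) Hu (v_idl ax) eqcell_trans eqcell_id (v_idr ax). }
  by move=> H; rewrite (K M) H -K.
Qed.

End TwoCellCalculus.

Ltac reassoc ax := rewrite -?(v_assoc ax).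
Ltac unfold_structural := rewrite ?a_fwE ?a_bwE ?luE ?lu_invE ?ruE ?ru_invE.
Ltac simpl_eqcell ax :=
  repeat rewrite ?eqcell_trans_ctx ?eqcell_trans ?eqcell_id ?(v_idl ax) ?(v_idr ax) ?(rwh_id2 ax) ?(lwh_id2 ax).
Ltac close_eqcell := solve [ repeat (reflexivity || apply: eqcell_irr || apply: UIP || f_equal) ].

(** * Pseudofunctors on arrowy subcategories *)

Lemma sig_eq (T : Type) (P : T -> Prop) (x y : sig P) : proj1_sig x = proj1_sig y -> x = y.
Proof. exact: eq_sig_hprop (fun _ => proof_irrelevance _) x y. Qed.

Section PseudofunctorOnSub.
Variables (C : TwoCat) (S : Arrowy C) (D : TwoCat) (F0 : ob C -> ob D).
Variables (F : PFData (Sub S) D F0) (HF : is_pseudofun F).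
Let axC := tcax C.
Let axD := tcax D.

Lemma Sub_idl {X Y : ob C} (f : hom (Sub S) X Y) : @comp1 (Sub S) _ _ _ (@id1 (Sub S) Y) f = f.
Proof. by apply: sig_eq; apply: (c_idl axC). Qed.
Lemma Sub_idr {X Y : ob C} (f : hom (Sub S) X Y) : @comp1 (Sub S) _ _ _ f (@id1 (Sub S) X) = f.
Proof. by apply: sig_eq; apply: (c_idr axC). Qed.

Lemma F2_eqcell {X Y : ob C} (x y : hom (Sub S) X Y) (e : proj1_sig x = proj1_sig y) :
  @F2 _ _ _ F X Y x y (eqcell e) = eqcell (f_equal (F1 F) (sig_eq e)).
Proof.
  move: (sig_eq e) => exy; destruct exy.
  by rewrite !eqcell_id (pf_id2 HF).
Qed.

Lemma Fci_Fc {X Y Z : ob C} (g : hom (Sub S) Y Z) (f : hom (Sub S) X Y) : vcomp (Fci F g f) (Fc F g f) = id2 _.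
Proof. exact: (proj1 (pf_Fc_iso HF g f)). Qed.
Lemma Fc_Fci {X Y Z : ob C} (g : hom (Sub S) Y Z) (f : hom (Sub S) X Y) : vcomp (Fc F g f) (Fci F g f) = id2 _.
Proof. exact: (proj2 (pf_Fc_iso HF g f)). Qed.
Lemma Fui_Fu (X : ob C) : vcomp (Fui F X) (Fu F X) = id2 _.
Proof. exact: (proj1 (pf_Fu_iso HF X)). Qed.
Lemma Fu_Fui (X : ob C) : vcomp (Fu F X) (Fui F X) = id2 _.
Proof. exact: (proj2 (pf_Fu_iso HF X)). Qed.

Lemma Fc_lunit {X Y : ob C} (f : hom (Sub S) X Y)
  (e : comp1 (id1 (F0 Y)) (F1 F f) = F1 F (@comp1 (Sub S) _ _ _ (@id1 (Sub S) Y) f)) :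
  vcomp (Fc F (@id1 (Sub S) Y) f) (rwh (Fu F Y) (F1 F f)) = eqcell e.
Proof.
  rewrite ((pf_lunit HF) _ _ f (eq_sym (c_idl axD _)) (eq_trans (eq_sym (c_idl axD _)) e)).
  by rewrite cast2_id2; apply: eqcell_irr.
Qed.

Lemma Fc_runit {X Y : ob C} (f : hom (Sub S) X Y)
  (e : comp1 (F1 F f) (id1 (F0 X)) = F1 F (@comp1 (Sub S) _ _ _ f (@id1 (Sub S) X))) :
  vcomp (Fc F f (@id1 (Sub S) X)) (lwh (F1 F f) (Fu F X)) = eqcell e.
Proof.
  rewrite ((pf_runit HF) _ _ f (eq_sym (c_idr axD _)) (eq_trans (eq_sym (c_idr axD _)) e)).
  by rewrite cast2_id2; apply: eqcell_irr.
Qed.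

Lemma Fci_lunit {X Y : ob C} (f : hom (Sub S) X Y)
  (e : F1 F (@comp1 (Sub S) _ _ _ (@id1 (Sub S) Y) f) = comp1 (id1 (F0 Y)) (F1 F f)) :
  Fci F (@id1 (Sub S) Y) f = vcomp (rwh (Fu F Y) (F1 F f)) (eqcell e).
Proof.
  transitivity (vcomp (Fci F _ _) (vcomp (eqcell (eq_sym e)) (eqcell e))).
  - by rewrite eqcell_trans eqcell_id (v_idr axD).
  - by rewrite -(Fc_lunit (eq_sym e)) !(v_assoc axD) Fci_Fc (v_idl axD).
Qed.

Lemma Fci_runit {X Y : ob C} (f : hom (Sub S) X Y)
  (e : F1 F (@comp1 (Sub S) _ _ _ f (@id1 (Sub S) X)) = comp1 (F1 F f) (id1 (F0 X))) :
  Fci F f (@id1 (Sub S) X) = vcomp (lwh (F1 F f) (Fu F X)) (eqcell e).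
Proof.
  transitivity (vcomp (Fci F _ _) (vcomp (eqcell (eq_sym e)) (eqcell e))).
  - by rewrite eqcell_trans eqcell_id (v_idr axD).
  - by rewrite -(Fc_runit (eq_sym e)) !(v_assoc axD) Fci_Fc (v_idl axD).
Qed.

Lemma Sub_id_unique (X : ob C) (x : hom (Sub S) X X) : proj1_sig x = id1 X -> x = @id1 (Sub S) X.
Proof. exact: (@sig_eq _ (fun f => inS S f) x (@id1 (Sub S) X)). Qed.

Lemma Fc_runit_idlike {X Y : ob C} (f : hom (Sub S) X Y) (x : hom (Sub S) X X) (hx : proj1_sig x = id1 X)
  (e : F1 F (@id1 (Sub S) X) = F1 F x)
  (e' : comp1 (F1 F f) (id1 (F0 X)) = F1 F (@comp1 (Sub S) _ _ _ f x)) {u} (y : cell u _) :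
  vcomp (Fc F f x) (vcomp (lwh (F1 F f) (eqcell e)) (vcomp (lwh (F1 F f) (Fu F X)) y))
  = vcomp (eqcell e') y.
Proof.
  move: e e'; rewrite (Sub_id_unique hx) => e e'.
  by rewrite eqcell_id (lwh_id2 axD) (v_idl axD) (v_assoc axD) Fc_runit.
Qed.

Lemma Fci_runit_idlike {X Y : ob C} (f : hom (Sub S) X Y) (x : hom (Sub S) X X) (hx : proj1_sig x = id1 X)
  (e : F1 F (@id1 (Sub S) X) = F1 F x)
  (e' : F1 F (@comp1 (Sub S) _ _ _ f x) = comp1 (F1 F f) (id1 (F0 X))) :
  Fci F f x = vcomp (lwh (F1 F f) (eqcell e)) (vcomp (lwh (F1 F f) (Fu F X)) (eqcell e')).
Proof.
  move: e e'; rewrite (Sub_id_unique hx) => e e'.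
  by rewrite eqcell_id (lwh_id2 axD) (v_idl axD) Fci_runit.
Qed.

End PseudofunctorOnSub.

(** * Icons *)

(* Lack's icons: transformations between pseudofunctors with the same object map whose
   components are identities. *)
Section Icons.
Variables (C : TwoCatData) (D : TwoCat) (F0 : ob C -> ob D).
Let axD := tcax D.

Definition iconTr (P Q : PFData C D F0) (rh : forall (X Y : ob C) (f : hom C X Y), cell (F1 P f) (F1 Q f))
  : TrData P Q :=
  @Build_TrData C D F0 F0 P Q (fun X => id1 (F0 X))
    (fun X Y f => vcomp (ru_inv D (F1 Q f)) (vcomp (rh X Y f) (lu D (F1 P f)))).

Record is_icon (P Q : PFData C D F0) (rh : forall (X Y : ob C) (f : hom C X Y), cell (F1 P f) (F1 Q f))
  : Prop := {
  icon_nat : forall (X Y : ob C) (f g : hom C X Y) (a : cell f g),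
    vcomp (rh X Y g) (F2 P a) = vcomp (F2 Q a) (rh X Y f);
  icon_unit : forall X : ob C, vcomp (rh X X (id1 X)) (Fu P X) = Fu Q X;
  icon_comp : forall (X Y Z : ob C) (f : hom C X Y) (g : hom C Y Z),
    vcomp (rh X Z (comp1 g f)) (Fc P g f)
    = vcomp (Fc Q g f) (vcomp (lwh (F1 Q g) (rh X Y f)) (rwh (rh Y Z g) (F1 P f)))
}.

Section InvertibleIcon.
Variables (P Q : PFData C D F0).
Unset Implicit Arguments.
Variable rh : forall (X Y : ob C) (f : hom C X Y), cell (F1 P f) (F1 Q f).
Variable rhi : forall (X Y : ob C) (f : hom C X Y), cell (F1 Q f) (F1 P f).
Set Implicit Arguments.
Hypothesis rhiK : forall X Y (f : hom C X Y), vcomp (rhi X Y f) (rh X Y f) = id2 _.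
Hypothesis rhK : forall X Y (f : hom C X Y), vcomp (rh X Y f) (rhi X Y f) = id2 _.
Hypothesis Hrh : is_icon rh.

Lemma iconTr_pseudonat : is_pseudonat (iconTr rh).
Proof.
  split.
  - move=> X Y f /=; exists (vcomp (lu_inv D _) (vcomp (rhi X Y f) (ru D _))).
    unfold_structural; split; reassoc axD; simpl_eqcell axD;
      [rewrite (vcomp_ctx _ (rhiK f)) | rewrite (vcomp_ctx _ (rhK f))]; by simpl_eqcell axD.
  - move=> X Y f g a /=; unfold_structural; rewrite lwh_id1E rwh_id1E; reassoc axD; simpl_eqcell axD.
    rewrite (vcomp_ctx _ (icon_nat Hrh a)); reassoc axD; close_eqcell.
  - move=> X Y Z f g /=; unfold_structural.
    rewrite lwh_id1E rwh_id1E !(lwh_vcomp axD) !(rwh_vcomp axD) !lwh_eqcell !rwh_eqcell.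
    reassoc axD; simpl_eqcell axD; rewrite (vcomp_ctx _ (icon_comp Hrh f g)); reassoc axD; close_eqcell.
  - move=> X /=; unfold_structural; rewrite lwh_id1E rwh_id1E; reassoc axD; simpl_eqcell axD.
    rewrite (vcomp_ctx _ (icon_unit Hrh X)); close_eqcell.
Qed.

Lemma is_icon_inverse : is_icon rhi.
Proof.
  split.
  - move=> X Y f g a.
    transitivity (vcomp (rhi X Y g) (vcomp (F2 Q a) (vcomp (rh X Y f) (rhi X Y f)))).
    { by rewrite rhK (v_idr axD). }
    rewrite (v_assoc axD (F2 Q a)) -(icon_nat Hrh) -(v_assoc axD) (v_assoc axD (rhi X Y g)).
    by rewrite rhiK (v_idl axD).
  - by move=> X; rewrite -(icon_unit Hrh) (v_assoc axD) rhiK (v_idl axD).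
  - move=> X Y Z f g.
    set K := vcomp (lwh (F1 Q g) (rh X Y f)) (rwh (rh Y Z g) (F1 P f)).
    set K' := vcomp (rwh (rhi Y Z g) (F1 P f)) (lwh (F1 Q g) (rhi X Y f)).
    have KK' : vcomp K K' = id2 _.
    { rewrite /K /K'; reassoc axD.
      rewrite (v_assoc axD (rwh _ _) (rwh _ _)) -(rwh_vcomp axD) rhK (rwh_id2 axD) (v_idl axD).
      by rewrite -(lwh_vcomp axD) rhK (lwh_id2 axD). }
    transitivity (vcomp (rhi X Z (comp1 g f)) (vcomp (Fc Q g f) (vcomp K K'))).
    { by rewrite KK' (v_idr axD). }
    rewrite (v_assoc axD (Fc Q g f)) -(icon_comp Hrh) -(v_assoc axD) (v_assoc axD (rhi _ _ _)).
    by rewrite rhiK (v_idl axD) /K' (interchange axD).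
Qed.

Lemma iconTr_comp_inverse : TrEq (compTr (iconTr rhi) (iconTr rh)) (idTr P).
Proof.
  exists (fun X => c_idl axD (id1 (F0 X))) => X Y f /=.
  rewrite cast2E; unfold_structural; rewrite lwh_id1E rwh_id1E; reassoc axD; simpl_eqcell axD.
  rewrite (vcomp_ctx _ (rhiK f)); simpl_eqcell axD; close_eqcell.
Qed.

End InvertibleIcon.
End Icons.

(** * The transformation rho *)

Section GDTransformation.
Variables (C : TwoCat) (A B : Arrowy C) (D : TwoCat) (F0 : ob C -> ob D).
Variables (FA : PFData (Sub A) D F0) (FB : PFData (Sub B) D F0).
Variables (HFA : is_pseudofun FA) (HFB : is_pseudofun FB).
Unset Implicit Arguments.
Variables (G : GType FA FB) (Ginv : GinvType FA FB) (HG : is_GD G Ginv).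
Set Implicit Arguments.
Let axC := tcax C.
Let axD := tcax D.

Local Notation AB := (Defs.AB A B).
Local Notation iA := (@inclA C A B _ _).
Local Notation iB := (@inclB C A B _ _).

Lemma inclA_id (X : ob C) : iA (@id1 (Sub AB) X) = @id1 (Sub A) X.
Proof. exact: sig_eq. Qed.
Lemma inclB_id (X : ob C) : iB (@id1 (Sub AB) X) = @id1 (Sub B) X.
Proof. exact: sig_eq. Qed.
(* Discharges the equalities of 1-cells left by rewriting with [eqcell]-valued laws. *)
Ltac solve_hom_eq :=
  rewrite ?inclA_id ?inclB_id ?Sub_idl ?Sub_idr ?(c_idl axD) ?(c_idr axD) ?(c_assoc axD); reflexivity.
Tactic Notation "rewrite_eq" uconstr(l) := rewrite l; repeat intros ?; try solve [solve_hom_eq].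

Lemma G_idB (X Y : ob C) (a b : hom (Sub A) X Y) (al : cell (proj1_sig a) (proj1_sig b)) :
  G X Y X Y b a (@id1 (Sub B) X) (@id1 (Sub B) Y)
     (vcomp (lu_inv C (proj1_sig b)) (vcomp al (ru C (proj1_sig a))))
  = vcomp (rwh (Fu FB Y) (F1 FA b)) (vcomp (lu_inv D (F1 FA b))
     (vcomp (F2 FA al) (vcomp (ru D (F1 FA a)) (lwh (F1 FA a) (Fui FB X))))).
Proof.
  rewrite -(gd_a HG); reassoc axD; unfold_structural; simpl_eqcell axD.
  rewrite rwh_vcomp_ctx (Fu_Fui HFB) (rwh_id2 axD) (v_idl axD).
  by rewrite -(lwh_vcomp axD) (Fu_Fui HFB) (lwh_id2 axD) (v_idr axD).
Qed.

Lemma G_idA (X Z : ob C) (q p : hom (Sub B) X Z) (al : cell (proj1_sig q) (proj1_sig p)) :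
  G X X Z Z (@id1 (Sub A) X) (@id1 (Sub A) Z) q p
     (vcomp (ru_inv C (proj1_sig p)) (vcomp al (lu C (proj1_sig q))))
  = vcomp (lwh (F1 FB p) (Fu FA X)) (vcomp (ru_inv D (F1 FB p))
     (vcomp (F2 FB al) (vcomp (lu D (F1 FB q)) (rwh (Fui FA Z) (F1 FB q))))).
Proof.
  rewrite -(gd_a' HG); reassoc axD; unfold_structural; simpl_eqcell axD.
  rewrite lwh_vcomp_ctx (Fu_Fui HFA) (lwh_id2 axD) (v_idl axD).
  by rewrite -(rwh_vcomp axD) (Fu_Fui HFA) (rwh_id2 axD) (v_idr axD).
Qed.

Lemma G_transport (X Y Z W : ob C) (b b' : hom (Sub A) X Y) (a a' : hom (Sub A) Z W)
  (q q' : hom (Sub B) X Z) (p p' : hom (Sub B) Y W)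
  (eb : b = b') (ea : a = a') (eq_q : q = q') (ep : p = p')
  (al : cell (comp1 (proj1_sig a) (proj1_sig q)) (comp1 (proj1_sig p) (proj1_sig b)))
  (al' : cell (comp1 (proj1_sig a') (proj1_sig q')) (comp1 (proj1_sig p') (proj1_sig b')))
  (E1 : comp1 (proj1_sig a) (proj1_sig q) = comp1 (proj1_sig a') (proj1_sig q'))
  (E2 : comp1 (proj1_sig p) (proj1_sig b) = comp1 (proj1_sig p') (proj1_sig b'))
  (H : al' = cast2 E1 E2 al)
  (E3 : comp1 (F1 FA a) (F1 FB q) = comp1 (F1 FA a') (F1 FB q'))
  (E4 : comp1 (F1 FB p) (F1 FA b) = comp1 (F1 FB p') (F1 FA b')) :
  G X Y Z W b' a' q' p' al' = cast2 E3 E4 (G X Y Z W b a q p al).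
Proof. by subst; rewrite (UIP_refl _ _ E1) (UIP_refl _ _ E2) (UIP_refl _ _ E3) (UIP_refl _ _ E4). Qed.

(* Paste the square by (b) with the (a)-square of [gm] (resp. by (b') with the (a')-square of
   [bt]); by (a) (resp. (a')) that square contributes [F_A gm] (resp. [F_B bt]). *)
Lemma G_whisker_b (X Y Z W : ob C) (b b' : hom (Sub A) X Y) (a : hom (Sub A) Z W)
  (q : hom (Sub B) X Z) (p : hom (Sub B) Y W)
  (dl : cell (comp1 (proj1_sig a) (proj1_sig q)) (comp1 (proj1_sig p) (proj1_sig b)))
  (gm : cell (proj1_sig b) (proj1_sig b')) :
  G X Y Z W b' a q p (vcomp (lwh (proj1_sig p) gm) dl)
  = vcomp (lwh (F1 FB p) (F2 FA gm)) (G X Y Z W b a q p dl).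
Proof.
  have H := gd_b HG (c1:=b') (c2:=b) (c3:=a) (q:=@id1 (Sub B) X) (p:=@id1 (Sub B) Y) (q':=q) (p':=p)
     (vcomp (lu_inv C (proj1_sig b')) (vcomp gm (ru C (proj1_sig b)))) dl.
  rewrite G_idB in H.
  match type of H with _ = vcomp (G _ _ _ _ _ _ _ _ ?k) _ => set K := k in H end.
  have HK : vcomp (lwh (proj1_sig p) gm) dl
    = cast2 (f_equal (comp1 (proj1_sig a)) (c_idr axC (proj1_sig q)))
            (f_equal (fun x => comp1 x (proj1_sig b')) (c_idr axC (proj1_sig p))) K.
  { rewrite cast2E /K; unfold_structural; rewrite !(lwh_vcomp axC) !lwh_eqcell rwh_id1E.
    by reassoc axC; simpl_eqcell axC. }
  rewrite (@G_transport _ _ _ _ b' b' a a _ q _ p eq_refl eq_refl (Sub_idr q) (Sub_idr p) K _ _ _ HK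
     (f_equal (fun x => comp1 (F1 FA a) (F1 FB x)) (Sub_idr q))
     (f_equal (fun x => comp1 (F1 FB x) (F1 FA b')) (Sub_idr p))).
  rewrite (vcomp_cancel_r (eq_sym H) (lwh_inverse _ (Fc_Fci HFB q (@id1 (Sub B) X)))).
  rewrite cast2E; unfold_structural.
  rewrite !(lwh_vcomp axD) !lwh_eqcell lwh_rwhE lwh_lwhE; reassoc axD; simpl_eqcell axD.
  rewrite rwh_vcomp_ctx; rewrite_eq (Fc_runit HFB).
  rewrite rwh_eqcell; simpl_eqcell axD.
  rewrite interchange_ctx rwh_id1E; rewrite_eq (Fci_runit HFB).
  rewrite (lwh_vcomp axD) lwh_eqcell lwh_lwhE; reassoc axD; simpl_eqcell axD.
  by rewrite lwh_vcomp_ctx (Fui_Fu HFB) (lwh_id2 axD); simpl_eqcell axD.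
Qed.

Lemma G_whisker_q (X Y Z W : ob C) (b : hom (Sub A) X Y) (a : hom (Sub A) Z W)
  (q q' : hom (Sub B) X Z) (p : hom (Sub B) Y W)
  (dl : cell (comp1 (proj1_sig a) (proj1_sig q)) (comp1 (proj1_sig p) (proj1_sig b)))
  (bt : cell (proj1_sig q') (proj1_sig q)) :
  G X Y Z W b a q' p (vcomp dl (lwh (proj1_sig a) bt))
  = vcomp (G X Y Z W b a q p dl) (lwh (F1 FA a) (F2 FB bt)).
Proof.
  have H := gd_b' HG (b:=@id1 (Sub A) X) (a:=@id1 (Sub A) Z) (p1:=q') (p2:=q) (b':=b) (a':=a) (p3:=p)
     (vcomp (ru_inv C (proj1_sig q)) (vcomp bt (lu C (proj1_sig q')))) dl.
  rewrite G_idA in H.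
  match type of H with _ = vcomp (G _ _ _ _ _ _ _ _ ?k) _ => set K := k in H end.
  have HK : vcomp dl (lwh (proj1_sig a) bt)
    = cast2 (f_equal (fun x => comp1 x (proj1_sig q')) (c_idr axC (proj1_sig a)))
            (f_equal (comp1 (proj1_sig p)) (c_idr axC (proj1_sig b))) K.
  { rewrite cast2E /K; unfold_structural; rewrite !(lwh_vcomp axC) !lwh_eqcell rwh_id1E.
    by reassoc axC; simpl_eqcell axC. }
  rewrite (@G_transport _ _ _ _ _ b _ a q' q' p p (Sub_idr b) (Sub_idr a) eq_refl eq_refl K _ _ _ HK
     (f_equal (fun x => comp1 (F1 FA x) (F1 FB q')) (Sub_idr a))
     (f_equal (fun x => comp1 (F1 FB p) (F1 FA x)) (Sub_idr b))).
  rewrite (vcomp_cancel_r (eq_sym H) (rwh_inverse _ (Fc_Fci HFA a (@id1 (Sub A) Z)))).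
  rewrite cast2E; unfold_structural.
  rewrite !(lwh_vcomp axD) !lwh_eqcell lwh_rwhE lwh_lwhE; reassoc axD; simpl_eqcell axD.
  rewrite -interchange_ctx lwh_compE; reassoc axD; simpl_eqcell axD.
  rewrite lwh_vcomp_ctx; rewrite_eq (Fc_runit HFA).
  rewrite lwh_eqcell rwh_id1E; reassoc axD; simpl_eqcell axD.
  rewrite_eq (Fci_runit HFA).
  rewrite (rwh_vcomp axD) rwh_eqcell; reassoc axD.
  rewrite rwh_vcomp_ctx -(lwh_vcomp axD) (Fui_Fu HFA) (lwh_id2 axD) (rwh_id2 axD).
  by simpl_eqcell axD.
Qed.

Definition GE {X Y : ob C} (f : hom (Sub AB) X Y) :=
  G X Y Y Y (iA f) (@id1 (Sub A) Y) (iB f) (@id1 (Sub B) Y) (id2 (comp1 (@id1 C Y) (proj1_sig f))).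

Lemma GE_nat {X Y : ob C} (f g : hom (Sub AB) X Y) (al : cell (proj1_sig f) (proj1_sig g)) :
  vcomp (GE g) (lwh (F1 FA (@id1 (Sub A) Y)) (@F2 _ _ _ FB _ _ (iB f) (iB g) al))
  = vcomp (lwh (F1 FB (@id1 (Sub B) Y)) (@F2 _ _ _ FA _ _ (iA f) (iA g) al)) (GE f).
Proof.
  rewrite /GE -G_whisker_b -G_whisker_q.
  by rewrite (v_idl axC) (v_idr axC).
Qed.

Lemma rhoCell_nat {X Y : ob C} (f g : hom (Sub AB) X Y) (al : cell (proj1_sig f) (proj1_sig g)) :
  vcomp (rhoCell G g) (@F2 _ _ _ FB _ _ (iB f) (iB g) al)
  = vcomp (@F2 _ _ _ FA _ _ (iA f) (iA g) al) (rhoCell G f).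
Proof.
  rewrite /rhoCell -/(GE f) -/(GE g); unfold_structural; reassoc axD.
  rewrite_eq eqcell_lwh_id1.
  rewrite -interchange_ctx (v_assoc axD (GE g)) GE_nat -(v_assoc axD).
  rewrite -interchange_ctx lwh_id1E; reassoc axD; simpl_eqcell axD; close_eqcell.
Qed.

Lemma GE_rhoCell {X Y : ob C} (f : hom (Sub AB) X Y) :
  GE f = vcomp (rwh (Fu FB Y) (F1 FA (iA f))) (vcomp (lu_inv D _) (vcomp (rhoCell G f)
           (vcomp (lu D _) (rwh (Fui FA Y) (F1 FB (iB f)))))).
Proof.
  rewrite /rhoCell -/(GE f); unfold_structural; reassoc axD; simpl_eqcell axD.
  rewrite rwh_vcomp_ctx (Fu_Fui HFB) (rwh_id2 axD) (v_idl axD).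
  by rewrite -(rwh_vcomp axD) (Fu_Fui HFA) (rwh_id2 axD) (v_idr axD).
Qed.

(* Pasting with E_p, E_q (by (b')) and E_a, E_b (by (b)), with [GE] rewritten via [rho]. *)
Lemma G_paste_Ep (X Y Z W : ob C) (b : hom (Sub A) X Y) (a : hom (Sub A) Z W)
  (q : hom (Sub B) X Z) (p : hom (Sub AB) Y W)
  (al : cell (comp1 (proj1_sig a) (proj1_sig q)) (comp1 (proj1_sig p) (proj1_sig b))) :
  G X W Z W (comp1 (iA p) b) a q (@id1 (Sub B) W)
    (vcomp (lwh (id1 W) al) (lu_inv C (comp1 (proj1_sig a) (proj1_sig q))))
  = vcomp (rwh (Fu FB W) _) (vcomp (lu_inv D _) (vcomp (Fc FA (iA p) b)
      (vcomp (rwh (rhoCell G p) (F1 FA b)) (G X Y Z W b a q (iB p) al)))).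
Proof.
  have H := gd_b' HG (b:=b) (a:=a) (p1:=q) (p2:=iB p) (b':=iA p) (a':=@id1 (Sub A) W)
     (p3:=@id1 (Sub B) W) al (id2 (comp1 (id1 W) (proj1_sig p))).
  match type of H with _ = vcomp (G _ _ _ _ _ _ _ _ ?k) _ => set K := k in H end.
  have HK : vcomp (lwh (id1 W) al) (lu_inv C (comp1 (proj1_sig a) (proj1_sig q)))
     = cast2 (f_equal (fun x => comp1 x (proj1_sig q)) (c_idl axC (proj1_sig a))) eq_refl K.
  { rewrite cast2E /K; unfold_structural; rewrite (rwh_id2 axC) lwh_id1E.
    by reassoc axC; simpl_eqcell axC; close_eqcell. }
  rewrite (@G_transport _ _ _ _ (comp1 (iA p) b) (comp1 (iA p) b) (comp1 (@id1 (Sub A) W) a) a q q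
     (@id1 (Sub B) W) (@id1 (Sub B) W) eq_refl (Sub_idl a) eq_refl eq_refl K _ _ _ HK
     (f_equal (fun x => comp1 (F1 FA x) (F1 FB q)) (Sub_idl a)) eq_refl).
  rewrite (vcomp_cancel_r (eq_sym H) (rwh_inverse _ (Fc_Fci HFA (@id1 (Sub A) W) a))).
  rewrite -/(GE p) (GE_rhoCell p); move: (rhoCell G p) => rp.
  rewrite_eq (Fci_lunit HFA).
  rewrite cast2E; unfold_structural.
  rewrite !(rwh_vcomp axD) !rwh_eqcell !rwh_rwhE; reassoc axD; simpl_eqcell axD.
  rewrite interchange_ctx -(interchange_ctx (Fui FA W)) rwh_vcomp_ctx (Fui_Fu HFA) !lwh_id1E.
  by reassoc axD; simpl_eqcell axD; close_eqcell.
Qed.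

Lemma G_paste_Eq (X Z W : ob C) (a : hom (Sub A) Z W) (q : hom (Sub AB) X Z) :
  G X W Z W (comp1 a (iA q)) a (iB q) (@id1 (Sub B) W) (lu_inv C (comp1 (proj1_sig a) (proj1_sig q)))
  = vcomp (rwh (Fu FB W) _) (vcomp (lu_inv D _) (vcomp (Fc FA a (iA q)) (lwh (F1 FA a) (rhoCell G q)))).
Proof.
  have H := gd_b' HG (b:=iA q) (a:=@id1 (Sub A) Z) (p1:=iB q) (p2:=@id1 (Sub B) Z) (b':=a) (a':=a)
     (p3:=@id1 (Sub B) W) (id2 (comp1 (id1 Z) (proj1_sig q)))
     (vcomp (lu_inv C (proj1_sig a)) (vcomp (id2 (proj1_sig a)) (ru C (proj1_sig a)))).
  match type of H with _ = vcomp (G _ _ _ _ _ _ _ _ ?k) _ => set K := k in H end.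
  have HK : lu_inv C (comp1 (proj1_sig a) (proj1_sig q))
     = cast2 (f_equal (fun x => comp1 x (proj1_sig q)) (c_idr axC (proj1_sig a))) eq_refl K.
  { rewrite cast2E /K; unfold_structural.
    rewrite (v_idl axC) !(rwh_vcomp axC) !rwh_eqcell (lwh_id2 axC).
    by reassoc axC; simpl_eqcell axC; close_eqcell. }
  rewrite (@G_transport _ _ _ _ (comp1 a (iA q)) (comp1 a (iA q)) (comp1 a (@id1 (Sub A) Z)) a (iB q) (iB q)
     (@id1 (Sub B) W) (@id1 (Sub B) W) eq_refl (Sub_idr a) eq_refl eq_refl K _ _ _ HK
     (f_equal (fun x => comp1 (F1 FA x) (F1 FB (iB q))) (Sub_idr a)) eq_refl).
  rewrite (vcomp_cancel_r (eq_sym H) (rwh_inverse _ (Fc_Fci HFA a (@id1 (Sub A) Z)))) G_idB.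
  rewrite -/(GE q) (GE_rhoCell q); move: (rhoCell G q) => rq.
  rewrite_eq (Fci_runit HFA); rewrite (pf_id2 HFA).
  rewrite cast2E; unfold_structural.
  rewrite !(rwh_vcomp axD) !rwh_eqcell !rwh_rwhE !rwh_lwhE !(lwh_vcomp axD) !lwh_eqcell.
  reassoc axD; simpl_eqcell axD.
  rewrite !lwh_vcomp_ctx -!(rwh_vcomp axD) (Fui_Fu HFB) (Fui_Fu HFA); simpl_eqcell axD.
  rewrite interchange_ctx lwh_id1E.
  by reassoc axD; simpl_eqcell axD; close_eqcell.
Qed.

Lemma rhoCell_square (X Y Z W : ob C) (b : hom (Sub A) X Y) (a : hom (Sub A) Z W)
  (q : hom (Sub AB) X Z) (p : hom (Sub AB) Y W)
  (al : cell (comp1 (proj1_sig a) (proj1_sig q)) (comp1 (proj1_sig p) (proj1_sig b))) :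
  vcomp (@F2 _ _ _ FA _ _ (comp1 a (iA q)) (comp1 (iA p) b) al)
    (vcomp (Fc FA a (iA q)) (lwh (F1 FA a) (rhoCell G q)))
  = vcomp (Fc FA (iA p) b) (vcomp (rwh (rhoCell G p) (F1 FA b)) (G X Y Z W b a (iB q) (iB p) al)).
Proof.
  have H := G_whisker_b (b := comp1 a (iA q)) (b' := comp1 (iA p) b) (q := iB q) (p := @id1 (Sub B) W)
     (lu_inv C (comp1 (proj1_sig a) (proj1_sig q))) al.
  rewrite G_paste_Ep G_paste_Eq interchange_ctx lwh_id1E !lu_invE in H.
  symmetry; apply: (cancel_iso_eqcell_l (rwh_inverse _ (Fui_Fu HFB W)) (e := eq_sym (c_idl axD _))).
  rewrite H; reassoc axD; simpl_eqcell axD; close_eqcell.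
Qed.

Lemma G_paste_Ea (X Y Z W : ob C) (b : hom (Sub A) X Y) (a : hom (Sub AB) Z W)
  (q : hom (Sub B) X Z) (p : hom (Sub B) Y W)
  (al : cell (comp1 (proj1_sig a) (proj1_sig q)) (comp1 (proj1_sig p) (proj1_sig b))) :
  G X Y W W b (@id1 (Sub A) W) (comp1 (iB a) q) p
    (vcomp (lu C (comp1 (proj1_sig p) (proj1_sig b))) (lwh (id1 W) al))
  = vcomp (G X Y Z W b (iA a) q p al) (vcomp (rwh (rhoCell G a) (F1 FB q))
      (vcomp (Fci FB (iB a) q) (vcomp (lu D _) (rwh (Fui FA W) _)))).
Proof.
  have H := gd_b HG (c1:=b) (c2:=iA a) (c3:=@id1 (Sub A) W) (q:=q) (p:=p) (q':=iB a)
     (p':=@id1 (Sub B) W) al (id2 (comp1 (id1 W) (proj1_sig a))).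
  match type of H with _ = vcomp (G _ _ _ _ _ _ _ _ ?k) _ => set K := k in H end.
  have HK : vcomp (lu C (comp1 (proj1_sig p) (proj1_sig b))) (lwh (id1 W) al)
     = cast2 eq_refl (f_equal (fun x => comp1 x (proj1_sig b)) (c_idl axC (proj1_sig p))) K.
  { rewrite cast2E /K; unfold_structural; rewrite (rwh_id2 axC) lwh_id1E.
    by reassoc axC; simpl_eqcell axC; close_eqcell. }
  rewrite (@G_transport _ _ _ _ b b (@id1 (Sub A) W) (@id1 (Sub A) W) (comp1 (iB a) q) (comp1 (iB a) q)
     (comp1 (@id1 (Sub B) W) p) p eq_refl eq_refl eq_refl (Sub_idl p) K _ _ _ HK
     eq_refl (f_equal (fun x => comp1 (F1 FB x) (F1 FA b)) (Sub_idl p))).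
  rewrite (vcomp_cancel_r (eq_sym H) (lwh_inverse _ (Fc_Fci HFB (iB a) q))).
  rewrite -/(GE a) (GE_rhoCell a); move: (rhoCell G a) => ra.
  rewrite cast2E; unfold_structural.
  rewrite !(rwh_vcomp axD) !rwh_eqcell !rwh_rwhE; reassoc axD; simpl_eqcell axD.
  rewrite (interchange_ctx (Fu FB W)) rwh_compE; reassoc axD; simpl_eqcell axD.
  rewrite rwh_vcomp_ctx; rewrite_eq (Fc_lunit HFB); rewrite rwh_eqcell; simpl_eqcell axD.
  rewrite (interchange axD (Fui FA W)) !lwh_id1E.
  by reassoc axD; simpl_eqcell axD; close_eqcell.
Qed.

Lemma G_paste_Eb (X Y W : ob C) (b : hom (Sub AB) X Y) (p : hom (Sub B) Y W) :
  G X Y W W (iA b) (@id1 (Sub A) W) (comp1 p (iB b)) p (lu C (comp1 (proj1_sig p) (proj1_sig b)))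
  = vcomp (lwh (F1 FB p) (rhoCell G b)) (vcomp (Fci FB p (iB b)) (vcomp (lu D _) (rwh (Fui FA W) _))).
Proof.
  have H := gd_b HG (c1:=iA b) (c2:=@id1 (Sub A) Y) (c3:=@id1 (Sub A) W) (q:=iB b) (p:=@id1 (Sub B) Y)
     (q':=p) (p':=p) (id2 (comp1 (id1 Y) (proj1_sig b)))
     (vcomp (ru_inv C (proj1_sig p)) (vcomp (id2 (proj1_sig p)) (lu C (proj1_sig p)))).
  match type of H with _ = vcomp (G _ _ _ _ _ _ _ _ ?k) _ => set K := k in H end.
  have HK : lu C (comp1 (proj1_sig p) (proj1_sig b))
     = cast2 eq_refl (f_equal (fun x => comp1 x (proj1_sig b)) (c_idr axC (proj1_sig p))) K.
  { rewrite cast2E /K; unfold_structural.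
    repeat rewrite ?(lwh_id2 axC) ?(rwh_id2 axC) ?(v_idl axC) ?(v_idr axC) ?(rwh_vcomp axC) ?(lwh_vcomp axC)
                   ?rwh_eqcell ?lwh_eqcell.
    by reassoc axC; simpl_eqcell axC; close_eqcell. }
  rewrite (@G_transport _ _ _ _ (iA b) (iA b) (@id1 (Sub A) W) (@id1 (Sub A) W) (comp1 p (iB b))
     (comp1 p (iB b)) (comp1 p (@id1 (Sub B) Y)) p eq_refl eq_refl eq_refl (Sub_idr p) K _ _ _ HK
     eq_refl (f_equal (fun x => comp1 (F1 FB x) (F1 FA (iA b))) (Sub_idr p))).
  rewrite (vcomp_cancel_r (eq_sym H) (lwh_inverse _ (Fc_Fci HFB p (iB b)))) G_idA.
  rewrite -/(GE b) (GE_rhoCell b); move: (rhoCell G b) => rb.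
  rewrite (pf_id2 HFB) cast2E; unfold_structural.
  rewrite !(rwh_vcomp axD) !rwh_eqcell !rwh_rwhE !rwh_lwhE !(lwh_vcomp axD) !lwh_eqcell (lwh_rwhE _ (Fu FB Y)).
  reassoc axD; simpl_eqcell axD.
  rewrite rwh_vcomp_ctx; rewrite_eq (Fc_runit HFB); rewrite rwh_eqcell; simpl_eqcell axD.
  rewrite lwh_vcomp_ctx -(rwh_vcomp axD) (Fui_Fu HFA); simpl_eqcell axD.
  rewrite (interchange axD (Fui FA W)) lwh_id1E.
  by reassoc axD; simpl_eqcell axD; close_eqcell.
Qed.

Lemma rhoCell_squareB (X Y Z W : ob C) (b : hom (Sub AB) X Y) (a : hom (Sub AB) Z W)
  (q : hom (Sub B) X Z) (p : hom (Sub B) Y W)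
  (al : cell (comp1 (proj1_sig a) (proj1_sig q)) (comp1 (proj1_sig p) (proj1_sig b))) :
  vcomp (G X Y Z W (iA b) (iA a) q p al) (vcomp (rwh (rhoCell G a) (F1 FB q)) (Fci FB (iB a) q))
  = vcomp (lwh (F1 FB p) (rhoCell G b))
      (vcomp (Fci FB p (iB b)) (@F2 _ _ _ FB _ _ (comp1 (iB a) q) (comp1 p (iB b)) al)).
Proof.
  have H := G_whisker_q (b := iA b) (a := @id1 (Sub A) W) (q := comp1 p (iB b)) (q' := comp1 (iB a) q)
     (p := p) (lu C (comp1 (proj1_sig p) (proj1_sig b))) al.
  rewrite G_paste_Ea G_paste_Eb -!(v_assoc axD) (interchange axD) lwh_id1E !luE in H.
  apply: (cancel_iso_eqcell_r (rwh_inverse _ (Fui_Fu HFA W)) (e := c_idl axD _)).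
  reassoc axD; rewrite H; reassoc axD; simpl_eqcell axD; close_eqcell.
Qed.

Lemma rhoInvCell_rhoCell {X Y : ob C} (f : hom (Sub AB) X Y) :
  vcomp (rhoInvCell Ginv f) (rhoCell G f) = id2 _.
Proof.
  rewrite /rhoCell /rhoInvCell; unfold_structural; reassoc axD; simpl_eqcell axD.
  rewrite rwh_vcomp_ctx (Fu_Fui HFB); simpl_eqcell axD.
  rewrite (v_assoc axD (Ginv _ _ _ _ _ _ _ _ _)) (proj1 (gd_iso HG _)) (v_idl axD).
  by rewrite rwh_vcomp_ctx (Fui_Fu HFA); simpl_eqcell axD.
Qed.

Lemma rhoCell_rhoInvCell {X Y : ob C} (f : hom (Sub AB) X Y) :
  vcomp (rhoCell G f) (rhoInvCell Ginv f) = id2 _.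
Proof.
  rewrite /rhoCell /rhoInvCell; unfold_structural; reassoc axD; simpl_eqcell axD.
  rewrite rwh_vcomp_ctx (Fu_Fui HFA); simpl_eqcell axD.
  rewrite (v_assoc axD (G _ _ _ _ _ _ _ _ _)) (proj2 (gd_iso HG _)) (v_idl axD).
  by rewrite rwh_vcomp_ctx (Fui_Fu HFB); simpl_eqcell axD.
Qed.

Lemma rhoInvCell_square (X Y Z W : ob C) (b : hom (Sub AB) X Y) (a : hom (Sub AB) Z W)
  (q : hom (Sub B) X Z) (p : hom (Sub B) Y W)
  (al : cell (comp1 (proj1_sig a) (proj1_sig q)) (comp1 (proj1_sig p) (proj1_sig b))) :
  vcomp (@F2 _ _ _ FB _ _ (comp1 (iB a) q) (comp1 p (iB b)) al)
    (vcomp (Fc FB (iB a) q) (rwh (rhoInvCell Ginv a) (F1 FB q)))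
  = vcomp (Fc FB p (iB b)) (vcomp (lwh (F1 FB p) (rhoInvCell Ginv b)) (G X Y Z W (iA b) (iA a) q p al)).
Proof.
  have inv : vcomp (vcomp (rwh (rhoCell G a) (F1 FB q)) (Fci FB (iB a) q))
                   (vcomp (Fc FB (iB a) q) (rwh (rhoInvCell Ginv a) (F1 FB q))) = id2 _.
  { reassoc axD; rewrite (v_assoc axD (Fci _ _ _)) (Fci_Fc HFB) (v_idl axD).
    by rewrite -(rwh_vcomp axD) rhoCell_rhoInvCell (rwh_id2 axD). }
  rewrite (vcomp_cancel_r (rhoCell_squareB al) inv); reassoc axD.
  rewrite lwh_vcomp_ctx rhoInvCell_rhoCell (lwh_id2 axD) (v_idl axD).
  by rewrite (v_assoc axD (Fc FB p (iB b))) (Fc_Fci HFB) (v_idl axD).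
Qed.

Lemma G_identity_square (X : ob C) (x : hom (Sub A) X X) (y : hom (Sub B) X X)
  (hx : proj1_sig x = id1 X) (hy : proj1_sig y = id1 X)
  (e : comp1 (id1 X) (proj1_sig y) = comp1 (id1 X) (proj1_sig x))
  (e1 : F1 FB y = comp1 (id1 (F0 X)) (F1 FB y)) (e2 : comp1 (id1 (F0 X)) (F1 FA x) = F1 FA x)
  (e3 : F1 FB y = F1 FB (@id1 (Sub B) X)) (e4 : F1 FA (@id1 (Sub A) X) = F1 FA x) :
  vcomp (eqcell e2) (vcomp (rwh (Fui FB X) (F1 FA x))
    (vcomp (G X X X X x (@id1 (Sub A) X) y (@id1 (Sub B) X) (eqcell e))
      (vcomp (rwh (Fu FA X) (F1 FB y)) (eqcell e1))))
  = vcomp (eqcell e4) (vcomp (Fu FA X) (vcomp (Fui FB X) (eqcell e3))).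
Proof.
  move: e e1 e2 e3 e4; rewrite (Sub_id_unique hx) (Sub_id_unique hy) => e e1 e2 e3 e4.
  have -> : eqcell e = vcomp (lu_inv C (id1 X)) (vcomp (id2 (id1 X)) (ru C (id1 X))).
  { by unfold_structural; simpl_eqcell axC; rewrite ?eqcell_id. }
  rewrite G_idB (pf_id2 HFA); unfold_structural; reassoc axD; simpl_eqcell axD.
  rewrite rwh_vcomp_ctx (Fui_Fu HFB) (rwh_id2 axD); simpl_eqcell axD.
  rewrite interchange_ctx rwh_id1E lwh_id1E.
  by reassoc axD; simpl_eqcell axD; close_eqcell.
Qed.

Lemma rhoCell_id (X : ob C) (e3 : F1 FB (iB (@id1 (Sub AB) X)) = F1 FB (@id1 (Sub B) X))
  (e4 : F1 FA (@id1 (Sub A) X) = F1 FA (iA (@id1 (Sub AB) X))) :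
  rhoCell G (@id1 (Sub AB) X) = vcomp (vcomp (eqcell e4) (Fu FA X)) (vcomp (Fui FB X) (eqcell e3)).
Proof.
  rewrite /rhoCell; unfold_structural.
  change (id2 (comp1 (id1 X) (proj1_sig (@id1 (Sub AB) X))))
    with (eqcell (@eq_refl _ (comp1 (id1 X) (proj1_sig (@id1 (Sub AB) X))))).
  by rewrite -(v_assoc axD); apply: G_identity_square.
Qed.

(* (c) and [rhoCell_squareB] for the square (1, g, f, gf) with the right-unit 2-cell share its
   [G]; eliminating it leaves [rho 1], which is a composite of unit constraints. *)
Lemma rhoCell_comp {X Y Z : ob C} (f : hom (Sub AB) X Y) (g : hom (Sub AB) Y Z)
  (e1 : F1 FB (@comp1 (Sub B) _ _ _ (iB g) (iB f)) = F1 FB (iB (@comp1 (Sub AB) _ _ _ g f)))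
  (e2 : F1 FA (@comp1 (Sub A) _ _ _ (iA g) (iA f)) = F1 FA (iA (@comp1 (Sub AB) _ _ _ g f))) :
  vcomp (rhoCell G (@comp1 (Sub AB) _ _ _ g f)) (vcomp (eqcell e1) (Fc FB (iB g) (iB f)))
  = vcomp (eqcell e2) (vcomp (Fc FA (iA g) (iA f))
      (vcomp (lwh (F1 FA (iA g)) (rhoCell G f)) (rwh (rhoCell G g) (F1 FB (iB f))))).
Proof.
  set gf := @comp1 (Sub AB) _ _ _ g f.
  have HA := rhoCell_square (b := iA (@id1 (Sub AB) X)) (a := iA g) (q := f) (p := gf)
     (ru_inv C (comp1 (proj1_sig g) (proj1_sig f))).
  have HB := rhoCell_squareB (b := @id1 (Sub AB) X) (a := g) (q := iB f) (p := iB gf)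
     (ru_inv C (comp1 (proj1_sig g) (proj1_sig f))).
  rewrite ru_invE (F2_eqcell HFA) in HA; rewrite ru_invE (F2_eqcell HFB) in HB.
  rewrite (v_assoc axD) in HB.
  have HGD := vcomp_cancel_r HB (Fci_Fc HFB (iB g) (iB f)).
  have HA' := f_equal (fun t => vcomp t (rwh (rhoCell G g) (F1 FB (iB f)))) HA.
  cbv beta in HA'; rewrite -!(v_assoc axD) HGD in HA'.
  rewrite (eqcell_moveL HA').
  move: (rhoCell G gf) => rgf.
  reassoc axD; rewrite_eq rhoCell_id.
  rewrite -(interchange_ctx rgf) !(lwh_vcomp axD); reassoc axD.
  rewrite_eq (Fc_runit_idlike HFA).
  rewrite (rwh_transport (f_equal (F1 FB) (eq_sym (inclB_id X))) rgf).
  rewrite_eq (Fci_runit_idlike HFB).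
  rewrite !lwh_eqcell; reassoc axD; simpl_eqcell axD.
  rewrite -(interchange_ctx rgf) lwh_vcomp_ctx (Fui_Fu HFB) rwh_id1E.
  by reassoc axD; simpl_eqcell axD; close_eqcell.
Qed.

Lemma rhoCell_icon :
  is_icon (P := restrict (@subB C A B) FB) (Q := restrict (@subA C A B) FA) (fun X Y f => rhoCell G f).
Proof.
  split.
  - by move=> X Y f g al; apply: rhoCell_nat.
  - move=> X; rewrite /restrict /=.
    rewrite (F2_eqcell HFB (x := @id1 (Sub B) X) (y := iB (@id1 (Sub AB) X)) eq_refl).
    rewrite (F2_eqcell HFA (x := @id1 (Sub A) X) (y := iA (@id1 (Sub AB) X)) eq_refl).
    rewrite_eq rhoCell_id; reassoc axD; simpl_eqcell axD.
    by rewrite (Fui_Fu HFB); simpl_eqcell axD; close_eqcell.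
  - move=> X Y Z f g; rewrite /restrict /=.
    rewrite (F2_eqcell HFB (x := comp1 (iB g) (iB f)) (y := iB (@comp1 (Sub AB) _ _ _ g f)) eq_refl).
    rewrite (F2_eqcell HFA (x := comp1 (iA g) (iA f)) (y := iA (@comp1 (Sub AB) _ _ _ g f)) eq_refl).
    by rewrite -(v_assoc axD (eqcell _)); apply: rhoCell_comp.
Qed.

End GDTransformation.

Theorem mainTheorem8 (C : TwoCat) (HC : is21 C) (A B : Arrowy C) (D : TwoCat)
  (F0 : ob C -> ob D) (FA : PFData (Sub A) D F0) (FB : PFData (Sub B) D F0)
  (HFA : is_pseudofun FA) (HFB : is_pseudofun FB)
  (G : GType FA FB) (Ginv : GinvType FA FB) (HG : is_GD G Ginv) :
  (* rho : F_B|_{A∩B} -> F_A|_{A∩B} is pseudonatural ... *)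
  is_pseudonat (rhoTr G)
  (* ... and invertible in PsFun(A∩B, D) *)
  /\ (exists s : TrData (restrict (@subA C A B) FA) (restrict (@subB C A B) FB),
        is_pseudonat s
        /\ TrEq (compTr s (rhoTr G)) (idTr (restrict (@subB C A B) FB))
        /\ TrEq (compTr (rhoTr G) s) (idTr (restrict (@subA C A B) FA)))
  (* (c) *)
  /\ (forall (X Y Z W : ob C) (b : hom (Sub A) X Y) (a : hom (Sub A) Z W)
        (q : hom (Sub (AB A B)) X Z) (p : hom (Sub (AB A B)) Y W)
        (al : cell (comp1 (proj1_sig a) (proj1_sig q)) (comp1 (proj1_sig p) (proj1_sig b))),
        vcomp (@F2 _ _ _ FA _ _ (comp1 a (@inclA C A B _ _ q)) (comp1 (@inclA C A B _ _ p) b) al)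
          (vcomp (Fc FA a (@inclA C A B _ _ q)) (lwh (F1 FA a) (rhoCell G q)))
        = vcomp (Fc FA (@inclA C A B _ _ p) b)
            (vcomp (rwh (rhoCell G p) (F1 FA b))
                   (G X Y Z W b a (@inclB C A B _ _ q) (@inclB C A B _ _ p) al)))
  (* (c') *)
  /\ (forall (X Y Z W : ob C) (b : hom (Sub (AB A B)) X Y) (a : hom (Sub (AB A B)) Z W)
        (q : hom (Sub B) X Z) (p : hom (Sub B) Y W)
        (al : cell (comp1 (proj1_sig a) (proj1_sig q)) (comp1 (proj1_sig p) (proj1_sig b))),
        vcomp (@F2 _ _ _ FB _ _ (comp1 (@inclB C A B _ _ a) q) (comp1 p (@inclB C A B _ _ b)) al)
          (vcomp (Fc FB (@inclB C A B _ _ a) q) (rwh (rhoInvCell Ginv a) (F1 FB q)))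
        = vcomp (Fc FB p (@inclB C A B _ _ b))
            (vcomp (lwh (F1 FB p) (rhoInvCell Ginv b))
                   (G X Y Z W (@inclA C A B _ _ b) (@inclA C A B _ _ a) q p al))).
Proof.
  set FB' := restrict (@subB C A B) FB.
  set FA' := restrict (@subA C A B) FA.
  pose rho (X Y : ob (Sub (AB A B))) (f : hom (Sub (AB A B)) X Y) : cell (F1 FB' f) (F1 FA' f) := rhoCell G f.
  pose rhoInv (X Y : ob (Sub (AB A B))) (f : hom (Sub (AB A B)) X Y) : cell (F1 FA' f) (F1 FB' f) := rhoInvCell Ginv f.
  have rhoInvK X Y f : vcomp (rhoInv X Y f) (rho X Y f) = id2 _ := rhoInvCell_rhoCell HFA HFB HG f.
  have rhoK X Y f : vcomp (rho X Y f) (rhoInv X Y f) = id2 _ := rhoCell_rhoInvCell HFA HFB HG f.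
  have rho_icon : is_icon rho := rhoCell_icon HFA HFB HG.
  (* [rhoTr G] is by definition [iconTr rho]. *)
  split; first exact: (iconTr_pseudonat rhoInvK rhoK rho_icon).
  split; last split.
  - exists (iconTr rhoInv); split; last split.
    + exact: iconTr_pseudonat rhoK rhoInvK (is_icon_inverse rhoInvK rhoK rho_icon).
    + exact: iconTr_comp_inverse rhoInvK.
    + exact: iconTr_comp_inverse rhoK.
  - by move=> X Y Z W b a q p al; apply: (rhoCell_square HFA HFB HG al).
  - by move=> X Y Z W b a q p al; apply: (rhoInvCell_square HFA HFB HG al).
Qed.
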